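(* Let $D>0$, $\eta>0$, $T>0$, let $p^0$ be a smooth $\Omega$-periodic function with $0<m_p\le p^0\le M_p$, and let $(\phi,p)$, $\phi\ge0$, $p\ge0$, be the exact solution of the periodic system $$\partial_t\phi=\frac{D}{4}\nabla\cdot\Big(\nabla\phi-\frac{2\phi}{p+p^0}\nabla(p+p^0)\Big)-(p+p^0)\phi,\qquad \partial_t p=\eta D\Delta p+(p+p^0)\phi-p$$ on $\Omega\times[0,T]$ with $\phi\in C^3([0,T];C^4_{per}(\Omega))$, $p\in C^3([0,T];C^5_{per}(\Omega))$. For $\tau>0$, $t_k=k\tau$, define the local truncation errors $R_\phi^k,R_p^k\in X$ by $$R_\phi^0=\frac{\phi_h(\tau)-\phi_h(0)}{\tau}-\frac D4\Delta_h\phi_h(\tau)+\frac D2\nabla_h\cdot\Big(\frac{\phi_h(0)}{p_h(0)+p^0}\nabla_h(p_h(0)+p^0)\Big)+(p_h(0)+p^0)\phi_h(0),$$ $$R_p^0=\frac{p_h(\tau)-p_h(0)}{\tau}-\eta D\Delta_hp_h(\tau)-(p_h(0)+p^0)\phi_h(0)+p_h(0),$$ and for $k\ge1$ $$R_\phi^k=\frac{\phi_h(t_{k+1})-\phi_h(t_k)}{\tau}-\frac D8\Delta_h(\phi_h(t_{k+1})+\phi_h(t_k))+\frac{3D}{4}\nabla_h\cdot\Big(\frac{\phi_h(t_k)}{p_h(t_k)+p^0}\nabla_h(p_h(t_k)+p^0)\Big)-\frac D4\nabla_h\cdot\Big(\frac{\phi_h(t_{k-1})}{p_h(t_{k-1})+p^0}\nabla_h(p_h(t_{k-1})+p^0)\Big)+\frac32(p_h(t_k)+p^0)\phi_h(t_k)-\frac12(p_h(t_{k-1})+p^0)\phi_h(t_{k-1}),$$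 $$R_p^k=\frac{p_h(t_{k+1})-p_h(t_k)}{\tau}-\frac{\eta D}{2}\Delta_h(p_h(t_{k+1})+p_h(t_k))-\frac32\big((p_h(t_k)+p^0)\phi_h(t_k)-p_h(t_k)\big)+\frac12\big((p_h(t_{k-1})+p^0)\phi_h(t_{k-1})-p_h(t_{k-1})\big).$$ Then for $0\le k\le T/\tau-1$, $$\|R_\phi^{k+1}\|_{L^2}+\|R_p^{k+1}\|_{H^1}\le C(\tau^2+h^2),\qquad \|R_\phi^0\|_{L^2}+\|R_p^0\|_{H^1}\le C(\tau+h^2),$$ where $C$ is independent of $\tau$, $h$ and $k$.
   Context: Grid: $\Omega$ is a square of side $L$; $h=L/N$, grid points $(x_i,y_j)=(a_{\min}+ih,b_{\min}+jh)$; $X$ is the space of periodic grid functions. For a continuous function $u$, $u_h(t)\in X$ is its grid restriction at time $t$; $p^0$ also denotes its grid restriction. $(D_xu)_{i+1/2,j}=(u_{i+1,j}-u_{i,j})/h$, $(D_yu)_{i,j+1/2}=(u_{i,j+1}-u_{i,j})/h$; for face-centred $f$, $(d_xf)_{i,j}=(f_{i+1/2,j}-f_{i-1/2,j})/h$, similarly $d_y$. $\nabla_hu=(D_xu,D_yu)$, $\nabla_h\cdot(f^x,f^y)=d_xf^x+d_yf^y$, $\Delta_h=\nabla_h\cdot\nabla_h$. For grid functions $w,v$, $\nabla_h\cdot(w\nabla_hv)=d_x(\bar wD_xv)+d_y(\bar wD_yv)$ with $\bar w$ the face-centred value of $w$ (averages of neighbouring nodal values). $\langle u,v\rangle=h^2\sum_{i,j=1}^Nu_{i,j}v_{i,j}$,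 $\|u\|_{L^2}^2=\langle u,u\rangle$, $\|u\|_{H^1}^2=\|u\|_{L^2}^2+\|\nabla_hu\|_{L^2}^2$ with $\|\nabla_hu\|_{L^2}^2=h^2\sum(|D_xu|^2+|D_yu|^2)$. $C^m_{per}(\Omega)$: $C^m$ functions with all derivatives of order $\le m$ periodic. *)

From Stdlib Require Import Reals ZArith Lra.
From Coquelicot Require Import Coquelicot.
Open Scope R_scope.

Definition fun3 := R -> R -> R -> R.

Definition dT (f : fun3) : fun3 := fun t x y => Derive (fun s => f s x y) t.
Definition dX (f : fun3) : fun3 := fun t x y => Derive (fun s => f t s y) x.
Definition dY (f : fun3) : fun3 := fun t x y => Derive (fun s => f t x s) y.

Fixpoint iter_op (op : fun3 -> fun3) (n : nat) (f : fun3) : fun3 :=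
  match n with O => f | S n' => op (iter_op op n' f) end.

Definition mixed (i j l : nat) (f : fun3) : fun3 :=
  iter_op dT i (iter_op dX j (iter_op dY l f)).

Definition uncurry3 (f : fun3) : R * R * R -> R :=
  fun z => f (fst (fst z)) (snd (fst z)) (snd z).

(* f has all mixed partials d_t^i d_x^j d_y^l, i <= a, j + l <= m, existing
   and jointly continuous (C^a in time with values in C^m in space). *)
Definition regular (a m : nat) (f : fun3) : Prop :=
  (forall l t x y, (l < m)%nat -> ex_derive (fun s => iter_op dY l f t x s) y) /\
  (forall j l t x y, (j + l < m)%nat ->
      ex_derive (fun s => iter_op dX j (iter_op dY l f) t s y) x) /\
  (forall i j l t x y, (i < a)%nat -> (j + l <= m)%nat ->
      ex_derive (fun s => mixed i j l f s x y) t) /\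
  (forall i j l t x y, (i <= a)%nat -> (j + l <= m)%nat ->
      continuous (uncurry3 (mixed i j l f)) (t, x, y)).

Definition periodic3 (L : R) (f : fun3) : Prop :=
  forall t x y, f t (x + L) y = f t x y /\ f t x (y + L) = f t x y.

Definition smooth_per2 (L : R) (g : R -> R -> R) : Prop :=
  (forall m, regular 0 m (fun _ x y => g x y)) /\
  periodic3 L (fun _ x y => g x y).

Definition solves_system (D eta T amin bmin L : R) (p0 : R -> R -> R)
  (phi p : fun3) : Prop :=
  let q : fun3 := fun t x y => p t x y + p0 x y in
  let fx : fun3 := fun t x y => dX phi t x y - 2 * phi t x y / q t x y * dX q t x y in
  let fy : fun3 := fun t x y => dY phi t x y - 2 * phi t x y / q t x y * dY q t x y in
  forall t x y, 0 <= t <= T -> amin <= x <= amin + L -> bmin <= y <= bmin + L ->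
    dT phi t x y = D / 4 * (dX fx t x y + dY fy t x y) - q t x y * phi t x y /\
    dT p t x y = eta * D * (dX (dX p) t x y + dY (dY p) t x y)
                 + q t x y * phi t x y - p t x y.

(* A periodic grid function is a map Z -> Z -> R; face-centred values at
   (i+1/2, j) (resp. (i, j+1/2)) are stored at index (i, j). *)
Definition grid := Z -> Z -> R.

Definition restr (amin bmin h : R) (u : R -> R -> R) : grid :=
  fun i j => u (amin + IZR i * h) (bmin + IZR j * h).

Definition Dxg (h : R) (u : grid) : grid := fun i j => (u (i + 1)%Z j - u i j) / h.
Definition Dyg (h : R) (u : grid) : grid := fun i j => (u i (j + 1)%Z - u i j) / h.
Definition dxg (h : R) (f : grid) : grid := fun i j => (f i j - f (i - 1)%Z j) / h.
Definition dyg (h : R) (f : grid) : grid := fun i j => (f i j - f i (j - 1)%Z) / h.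
Definition avgx (w : grid) : grid := fun i j => (w i j + w (i + 1)%Z j) / 2.
Definition avgy (w : grid) : grid := fun i j => (w i j + w i (j + 1)%Z) / 2.

Definition lap (h : R) (u : grid) : grid :=
  fun i j => dxg h (Dxg h u) i j + dyg h (Dyg h u) i j.

Definition divwgrad (h : R) (w v : grid) : grid :=
  fun i j => dxg h (fun a b => avgx w a b * Dxg h v a b) i j
           + dyg h (fun a b => avgy w a b * Dyg h v a b) i j.

(* sumN n f = f 1 + ... + f n *)
Fixpoint sumN (n : nat) (f : nat -> R) : R :=
  match n with O => 0 | S n' => sumN n' f + f (S n') end.

Definition gsum (N : nat) (u : grid) : R :=
  sumN N (fun a => sumN N (fun b => u (Z.of_nat a) (Z.of_nat b))).

Definition inner (N : nat) (h : R) (u v : grid) : R :=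
  h ^ 2 * gsum N (fun i j => u i j * v i j).
Definition normL2 (N : nat) (h : R) (u : grid) : R := sqrt (inner N h u u).
Definition gradsq (N : nat) (h : R) (u : grid) : R :=
  h ^ 2 * gsum N (fun i j => (Dxg h u i j) ^ 2 + (Dyg h u i j) ^ 2).
Definition normH1 (N : nat) (h : R) (u : grid) : R :=
  sqrt (inner N h u u + gradsq N h u).

Section Trunc.
Variables (D eta amin bmin h tau : R) (p0 : R -> R -> R) (phi p : fun3).

Definition Phh (t : R) : grid := restr amin bmin h (fun x y => phi t x y).
Definition Ph (t : R) : grid := restr amin bmin h (fun x y => p t x y).
Definition P0h : grid := restr amin bmin h p0.
Definition Vh (t : R) : grid := fun i j => Ph t i j + P0h i j.
Definition Wh (t : R) : grid := fun i j => Phh t i j / Vh t i j.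
Definition tk (k : nat) : R := INR k * tau.

Definition Rphi0 : grid := fun i j =>
  (Phh tau i j - Phh 0 i j) / tau - D / 4 * lap h (Phh tau) i j
  + D / 2 * divwgrad h (Wh 0) (Vh 0) i j + Vh 0 i j * Phh 0 i j.

Definition Rp0 : grid := fun i j =>
  (Ph tau i j - Ph 0 i j) / tau - eta * D * lap h (Ph tau) i j
  - Vh 0 i j * Phh 0 i j + Ph 0 i j.

(* for k >= 1 *)
Definition Rphik (k : nat) : grid := fun i j =>
  (Phh (tk (k + 1)) i j - Phh (tk k) i j) / tau
  - D / 8 * lap h (fun a b => Phh (tk (k + 1)) a b + Phh (tk k) a b) i j
  + 3 * D / 4 * divwgrad h (Wh (tk k)) (Vh (tk k)) i j
  - D / 4 * divwgrad h (Wh (tk (k - 1))) (Vh (tk (k - 1))) i j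
  + 3 / 2 * (Vh (tk k) i j * Phh (tk k) i j)
  - 1 / 2 * (Vh (tk (k - 1)) i j * Phh (tk (k - 1)) i j).

Definition Rpk (k : nat) : grid := fun i j =>
  (Ph (tk (k + 1)) i j - Ph (tk k) i j) / tau
  - eta * D / 2 * lap h (fun a b => Ph (tk (k + 1)) a b + Ph (tk k) a b) i j
  - 3 / 2 * (Vh (tk k) i j * Phh (tk k) i j - Ph (tk k) i j)
  + 1 / 2 * (Vh (tk (k - 1)) i j * Phh (tk (k - 1)) i j - Ph (tk (k - 1)) i j).
End Trunc.

(* At a grid point every truncation error is a continuous expression in the exact solution.
   Inserting the differential equations at that point splits it into residuals of
   one-dimensional stencils: the Crank-Nicolson/Adams-Bashforth time stencil (forward Euler
   for the first step), the five-point Laplacian, the second time difference of the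
   Laplacian, and the conservative discretisation of div (W grad V) with W = phi / (p + p0),
   V = p + p0. Taylor's formula bounds each residual by tau^2 (resp. tau) or h^2 times a
   derivative of the solution, and these derivatives are bounded on a compact neighbourhood
   of the period cell. The discrete H1 norm of R_p also involves differences of residuals
   at neighbouring grid points; by the mean value theorem they cost one more spatial
   derivative, which is where p needs five of them and where time and space derivatives
   have to be commuted. Summing N^2 pointwise bounds with weight h^2 = (L / N)^2 gives
   the norms. *)

From Stdlib Require Import Reals ZArith Lra Lia Classical ClassicalEpsilon.
From Coquelicot Require Import Coquelicot.
Open Scope R_scope.

Lemma Rabs_div_le a A d : 0 < d -> Rabs a <= A * d -> Rabs (a / d) <= A.
Proof.
  intros Hd H. unfold Rdiv. rewrite Rabs_mult, Rabs_inv, (Rabs_pos_eq d) by lra.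
  apply Rmult_le_reg_r with d; auto. field_simplify; lra.
Qed.

Lemma Rabs_plus_le a b A B : Rabs a <= A -> Rabs b <= B -> Rabs (a + b) <= A + B.
Proof. intros. eapply Rle_trans; [apply Rabs_triang | lra]. Qed.

Lemma Rabs_mult_le a b A B : Rabs a <= A -> Rabs b <= B -> Rabs (a * b) <= A * B.
Proof. intros. rewrite Rabs_mult. apply Rmult_le_compat; auto; apply Rabs_pos. Qed.

Lemma Rabs_le_nonneg a M : Rabs a <= M -> 0 <= M.
Proof. pose proof (Rabs_pos a). lra. Qed.

Ltac solve_minmax := unfold Rmin, Rmax; repeat destruct Rle_dec; lra.

Lemma Rabs_le_scal c a A : 0 <= c -> Rabs a <= A -> - (c * A) <= c * a <= c * A.
Proof.
  intros Hc H. apply Rabs_le_between in H.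
  split; [rewrite Ropp_mult_distr_r |]; apply Rmult_le_compat_l; lra.
Qed.

Lemma lin_comb_le x y a b K : 0 <= x -> 0 <= y -> a <= K -> b <= K -> x * a + y * b <= K * (x + y).
Proof. intros. nra. Qed.

Lemma Rabs_affine3_le a b c e f M A B :
  Rabs a <= M -> Rabs b <= M -> Rabs c <= M -> Rabs e <= A -> Rabs f <= B ->
  Rabs (a + e * b + f * c) <= M * (1 + A + B).
Proof.
  intros Ha Hb Hc He Hf. apply Rle_trans with (M + A * M + B * M); [|right; ring].
  apply Rabs_plus_le; [apply Rabs_plus_le|]; [exact Ha | ..]; now apply Rabs_mult_le.
Qed.

(** * Taylor expansions and the mean value theorem *)

Definition ex_derive_upto (u : R -> R) (n : nat) : Prop :=
  forall k z, (k <= n)%nat -> ex_derive_n u k z.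

Lemma ex_derive_upto_le u n m : (m <= n)%nat -> ex_derive_upto u n -> ex_derive_upto u m.
Proof. intros Hmn Hu k z Hk. apply Hu. lia. Qed.

Lemma ex_derive_upto_pred u n : ex_derive_upto u (S n) -> ex_derive_upto u n.
Proof. apply ex_derive_upto_le. lia. Qed.

Lemma Derive_n_Derive u k z : Derive_n (Derive u) k z = Derive_n u (S k) z.
Proof. rewrite (Derive_n_comp u k 1). f_equal. lia. Qed.

Lemma ex_derive_upto_Derive u n : ex_derive_upto u (S n) -> ex_derive_upto (Derive u) n.
Proof.
  intros Hu [|k] z Hk; [exact I|].
  apply ex_derive_ext with (f := Derive_n u (S k)).
  - intros t. now rewrite Derive_n_Derive.
  - apply (Hu (S (S k))). lia.
Qed.

Lemma ex_derive_upto_is_derive u n x :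
  ex_derive_upto u (S n) -> is_derive u x (Derive u x).
Proof. intros Hu. apply Derive_correct, (Hu 1%nat). lia. Qed.

Lemma taylor_lagrange_lt (u : R -> R) n x y M : x < y -> ex_derive_upto u (S n) ->
  (forall z, x <= z <= y -> Rabs (Derive_n u (S n) z) <= M) ->
  Rabs (u y - sum_f_R0 (fun k => (y - x) ^ k / INR (fact k) * Derive_n u k x) n)
  <= (y - x) ^ S n / INR (fact (S n)) * M.
Proof.
  intros Hxy Hu HM.
  destruct (Taylor_Lagrange u n x y Hxy (fun t _ k Hk => Hu k t Hk)) as [z [Hz ->]].
  assert (Hc : 0 < (y - x) ^ S n / INR (fact (S n))).
  { apply Rdiv_lt_0_compat; [apply pow_lt; lra | apply INR_fact_lt_0]. }
  replace (_ + _ - _) with ((y - x) ^ S n / INR (fact (S n)) * Derive_n u (S n) z) by ring.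
  rewrite Rabs_mult, (Rabs_pos_eq _ (Rlt_le _ _ Hc)).
  apply Rmult_le_compat_l; [lra | apply HM; lra].
Qed.

(* For [y < x], apply the previous lemma to [s |-> u (- s)] on [-x, -y]. *)
Lemma taylor_lagrange_abs (u : R -> R) n x y M : x <> y -> ex_derive_upto u (S n) ->
  (forall z, Rmin x y <= z <= Rmax x y -> Rabs (Derive_n u (S n) z) <= M) ->
  Rabs (u y - sum_f_R0 (fun k => (y - x) ^ k / INR (fact k) * Derive_n u k x) n)
  <= Rabs (y - x) ^ S n / INR (fact (S n)) * M.
Proof.
  intros Hne Hu HM.
  destruct (Rlt_or_le x y) as [Hlt|Hle].
  - rewrite (Rabs_pos_eq (y - x)) by lra. apply taylor_lagrange_lt; auto.
    intros z Hz. apply HM. rewrite Rmin_left, Rmax_right; lra.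
  - assert (Hlt : y < x) by (destruct Hle; [lra | congruence]).
    set (g := fun s => u (- s)).
    assert (Hg : forall k z, (k <= S n)%nat -> Derive_n g k z = (-1) ^ k * Derive_n u k (- z)).
    { intros k z Hk. apply Derive_n_comp_opp, filter_forall. intros w j Hj. apply Hu. lia. }
    assert (Hgex : ex_derive_upto g (S n)).
    { intros k z Hk. apply ex_derive_n_comp_opp, filter_forall. intros w j Hj. apply Hu. lia. }
    assert (Hsum : sum_f_R0 (fun k => (- y - - x) ^ k / INR (fact k) * Derive_n g k (- x)) n
                   = sum_f_R0 (fun k => (y - x) ^ k / INR (fact k) * Derive_n u k x) n).
    { apply sum_eq. intros k Hk. rewrite Hg by lia. rewrite Ropp_involutive.
      replace (- y - - x) with ((-1) * (y - x)) by ring.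
      rewrite Rpow_mult_distr.
      replace ((-1) ^ k * (y - x) ^ k / INR (fact k) * ((-1) ^ k * Derive_n u k x))
        with (((-1) * (-1)) ^ k * ((y - x) ^ k / INR (fact k) * Derive_n u k x))
        by (rewrite Rpow_mult_distr; unfold Rdiv; ring).
      replace ((-1) * (-1)) with 1 by ring. now rewrite pow1, Rmult_1_l. }
    pose proof (taylor_lagrange_lt g n (- x) (- y) M ltac:(lra) Hgex) as H.
    rewrite Hsum in H.
    replace (u y) with (g (- y)) by (unfold g; now rewrite Ropp_involutive).
    rewrite (Rabs_left (y - x)) by lra. replace (- (y - x)) with (- y - - x) by ring.
    apply H. intros z Hz. rewrite Hg, Rabs_mult, pow_1_abs, Rmult_1_l by lia.
    apply HM. rewrite Rmin_right, Rmax_left; lra.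
Qed.

Ltac taylor_instance n :=
  intros u x y M Hne Hu HM;
  pose proof (taylor_lagrange_abs u n x y M Hne Hu HM) as H;
  cbn [sum_f_R0 fact Nat.mul Nat.add INR pow] in H;
  change (Derive_n u 0 x) with (u x) in H;
  change (Derive_n u 1 x) with (Derive u x) in H;
  eapply Rle_trans; [| eapply Rle_trans; [exact H |]];
  [apply Req_le; f_equal; field | apply Req_le; field].

Lemma taylor_order1 : forall u x y M, x <> y -> ex_derive_upto u 2 ->
  (forall z, Rmin x y <= z <= Rmax x y -> Rabs (Derive_n u 2 z) <= M) ->
  Rabs (u y - u x - (y - x) * Derive u x) <= Rabs (y - x) ^ 2 / 2 * M.
Proof. taylor_instance 1%nat. Qed.

Lemma taylor_order2 : forall u x y M, x <> y -> ex_derive_upto u 3 ->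
  (forall z, Rmin x y <= z <= Rmax x y -> Rabs (Derive_n u 3 z) <= M) ->
  Rabs (u y - u x - (y - x) * Derive u x - (y - x) ^ 2 / 2 * Derive_n u 2 x)
  <= Rabs (y - x) ^ 3 / 6 * M.
Proof. taylor_instance 2%nat. Qed.

Lemma taylor_order3 : forall u x y M, x <> y -> ex_derive_upto u 4 ->
  (forall z, Rmin x y <= z <= Rmax x y -> Rabs (Derive_n u 4 z) <= M) ->
  Rabs (u y - u x - (y - x) * Derive u x - (y - x) ^ 2 / 2 * Derive_n u 2 x
        - (y - x) ^ 3 / 6 * Derive_n u 3 x)
  <= Rabs (y - x) ^ 4 / 24 * M.
Proof. taylor_instance 3%nat. Qed.

Lemma mean_value (u : R -> R) a b : (forall z, ex_derive u z) ->
  exists c, Rmin a b <= c <= Rmax a b /\ u b - u a = Derive u c * (b - a).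
Proof.
  intros Hu. destruct (MVT_gen u a b (Derive u)) as [c [Hc E]].
  - intros z _. apply Derive_correct, Hu.
  - intros z _. apply continuity_pt_filterlim. apply (ex_derive_continuous u z (Hu z)).
  - exists c. auto.
Qed.

Lemma increment_abs_le (F F' : R -> R) X h K : 0 < h ->
  (forall z, is_derive F z (F' z)) ->
  (forall z, X <= z <= X + h -> Rabs (F' z) <= K) ->
  Rabs (F (X + h) - F X) <= h * K.
Proof.
  intros Hh HF HK. destruct (MVT_gen F X (X + h) F') as [c [Hc ->]].
  - intros z _. apply HF.
  - intros z _. apply continuity_pt_filterlim, (ex_derive_continuous F z).
    eexists. apply HF.
  - replace (X + h - X) with h by ring. rewrite Rabs_mult, (Rabs_pos_eq h), Rmult_comm by lra.
    apply Rmult_le_compat_l; [lra|]. apply HK. revert Hc. solve_minmax.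
Qed.

Lemma is_derive_abs_le (F : R -> R) t l d K : 0 < d -> is_derive F t l ->
  (forall s, Rabs s < d -> Rabs (F (t + s) - F t) <= K * Rabs s) -> Rabs l <= K.
Proof.
  intros Hd Hl HK. apply Rnot_lt_le. intros Hlt.
  apply is_derive_Reals in Hl.
  destruct (Hl (Rabs l - K) ltac:(lra)) as [d' Hd'].
  set (s := Rmin (d / 2) (d' / 2)).
  assert (Hs0 : 0 < s) by (unfold s; apply Rmin_glb_lt; [lra | destruct d'; simpl; lra]).
  assert (Hsd : s < d) by (unfold s; eapply Rle_lt_trans; [apply Rmin_l | lra]).
  assert (Hsd' : s < d') by (unfold s; eapply Rle_lt_trans; [apply Rmin_r | destruct d'; simpl; lra]).
  specialize (Hd' s ltac:(lra) ltac:(rewrite Rabs_pos_eq; lra)).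
  specialize (HK s ltac:(rewrite Rabs_pos_eq; lra)).
  rewrite (Rabs_pos_eq s) in HK by lra.
  assert (Rabs ((F (t + s) - F t) / s) <= K) by (apply Rabs_div_le; auto).
  pose proof (Rabs_triang_inv l ((F (t + s) - F t) / s)).
  rewrite <- Rabs_Ropp in Hd'.
  replace (- ((F (t + s) - F t) / s - l)) with (l - (F (t + s) - F t) / s) in Hd' by ring.
  lra.
Qed.

Lemma double_increment_mean_value (f : R -> R -> R) t x s h :
  (forall s z, ex_derive (fun z => f s z) z) ->
  (forall s z, ex_derive (fun s => Derive (fun z => f s z) z) s) ->
  exists c1 c2, Rmin x (x + h) <= c1 <= Rmax x (x + h) /\ Rmin t (t + s) <= c2 <= Rmax t (t + s) /\
    (f (t + s) (x + h) - f t (x + h)) - (f (t + s) x - f t x)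
    = h * s * Derive (fun s => Derive (fun z => f s z) c1) c2.
Proof.
  intros Hfz Hfsz.
  destruct (mean_value (fun z => f (t + s) z - f t z) x (x + h)) as [c1 [Hc1 E1]].
  { intros z. apply (ex_derive_minus (fun z => f (t + s) z) (fun z => f t z)); auto. }
  rewrite (Derive_minus (fun z : R => f (t + s) z) (fun z : R => f t z)) in E1 by auto.
  destruct (mean_value (fun s => Derive (fun z => f s z) c1) t (t + s)) as [c2 [Hc2 E2]].
  { intros s'. auto. }
  exists c1, c2. repeat split; try apply Hc1; try apply Hc2.
  replace (f (t + s) (x + h) - f t (x + h) - (f (t + s) x - f t x))
    with ((Derive (fun z => f (t + s) z) c1 - Derive (fun z => f t z) c1) * (x + h - x))
    by (rewrite <- E1; ring).
  rewrite E2. ring.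
Qed.

Lemma clairaut (f : R -> R -> R) t x :
  (forall s z, ex_derive (fun z => f s z) z) ->
  (forall s z, ex_derive (fun s => f s z) s) ->
  (forall s z, ex_derive (fun s => Derive (fun z => f s z) z) s) ->
  (forall eps, 0 < eps -> exists d, 0 < d /\ forall s z, Rabs (s - t) < d -> Rabs (z - x) < d ->
     Rabs (Derive (fun s => Derive (fun z => f s z) z) s
           - Derive (fun s => Derive (fun z => f s z) x) t) < eps) ->
  is_derive (fun z => Derive (fun s => f s z) t) x
            (Derive (fun s => Derive (fun z => f s z) x) t).
Proof.
  intros Hfz Hfs Hfsz Hcont.
  set (c := Derive (fun s => Derive (fun z => f s z) x) t).
  apply is_derive_Reals. intros eps Heps.
  destruct (Hcont (eps / 2) ltac:(lra)) as [d [Hd0 Hd]].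
  exists (mkposreal d Hd0). intros h Hh0 Hh. simpl in Hh.
  set (G := fun s => f s (x + h) - f s x - h * c * s).
  assert (HG : is_derive G t (Derive (fun s => f s (x + h)) t - Derive (fun s => f s x) t - h * c)).
  { unfold G. apply (is_derive_minus (fun s => f s (x + h) - f s x) (fun s => h * c * s)).
    - apply (is_derive_minus (fun s => f s (x + h)) (fun s => f s x)); apply Derive_correct; auto.
    - auto_derive; auto; ring. }
  assert (Hb : Rabs (Derive (fun s => f s (x + h)) t - Derive (fun s => f s x) t - h * c)
               <= eps / 2 * Rabs h).
  { apply (is_derive_abs_le G t _ d (eps / 2 * Rabs h) Hd0 HG).
    intros s Hs.
    destruct (double_increment_mean_value f t x s h Hfz Hfsz) as (c1 & c2 & Hc1 & Hc2 & E).
    pose proof (Rabs_def2 _ _ Hh). pose proof (Rabs_def2 _ _ Hs).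
    assert (Hc1' : Rabs (c1 - x) < d) by (apply Rabs_def1; revert Hc1; solve_minmax).
    assert (Hc2' : Rabs (c2 - t) < d) by (apply Rabs_def1; revert Hc2; solve_minmax).
    specialize (Hd c2 c1 Hc2' Hc1'). fold c in Hd.
    replace (G (t + s) - G t)
      with (h * s * (Derive (fun s => Derive (fun z => f s z) c1) c2 - c))
      by (unfold G; rewrite Rmult_minus_distr_l, <- E; ring).
    rewrite !Rabs_mult.
    assert (0 <= Rabs h * Rabs s) by (apply Rmult_le_pos; apply Rabs_pos).
    nra. }
  replace ((Derive (fun s => f s (x + h)) t - Derive (fun s => f s x) t) / h - c)
    with ((Derive (fun s => f s (x + h)) t - Derive (fun s => f s x) t - h * c) / h)
    by (field; auto).
  unfold Rdiv. rewrite Rabs_mult, Rabs_inv.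
  apply Rle_lt_trans with (eps / 2 * Rabs h * / Rabs h).
  - apply Rmult_le_compat_r; [left; apply Rinv_0_lt_compat, Rabs_pos_lt; auto | exact Hb].
  - field_simplify; [lra|]. apply Rabs_no_R0; auto.
Qed.

Lemma is_derive_Rplus (f g : R -> R) x a b :
  is_derive f x a -> is_derive g x b -> is_derive (fun z => f z + g z) x (a + b).
Proof. intros. now apply (is_derive_plus f g). Qed.

Lemma is_derive_Rminus (f g : R -> R) x a b :
  is_derive f x a -> is_derive g x b -> is_derive (fun z => f z - g z) x (a - b).
Proof. intros. now apply (is_derive_minus f g). Qed.

Lemma is_derive_Rdiv_r (f : R -> R) c x a :
  is_derive f x a -> is_derive (fun z => f z / c) x (a / c).
Proof.
  intros H. unfold Rdiv. rewrite Rmult_comm.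
  apply (is_derive_ext (fun z => / c * f z)); [intros; apply Rmult_comm|].
  now apply is_derive_scal.
Qed.

Lemma is_derive_Rshift (f : R -> R) x h a :
  is_derive f (x + h) a -> is_derive (fun z => f (z + h)) x a.
Proof.
  intros H. replace a with (scal 1 a) by (apply Rmult_1_l).
  apply (is_derive_comp f (fun z => z + h)); [exact H|].
  apply (is_derive_ext (fun z => z + h)); [reflexivity|]. auto_derive; auto; ring.
Qed.

(** * Consistency of one-dimensional stencils *)

Definition cdiff2 (u : R -> R) (x h : R) : R := (u (x + h) - 2 * u x + u (x - h)) / h ^ 2.

Definition flux_diff (w v : R -> R) (x h : R) : R :=
  ((w x + w (x + h)) / 2 * ((v (x + h) - v x) / h)
   - (w (x - h) + w x) / 2 * ((v x - v (x - h)) / h)) / h.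

Lemma cdiff2_error u x h M : 0 < h -> ex_derive_upto u 4 ->
  (forall z, x - h <= z <= x + h -> Rabs (Derive_n u 4 z) <= M) ->
  Rabs (cdiff2 u x h - Derive_n u 2 x) <= h ^ 2 / 12 * M.
Proof.
  intros Hh Hu HM.
  assert (Ep := taylor_order3 u x (x + h) M ltac:(lra) Hu
                  ltac:(intros z Hz; apply HM; revert Hz; solve_minmax)).
  assert (Em := taylor_order3 u x (x - h) M ltac:(lra) Hu
                  ltac:(intros z Hz; apply HM; revert Hz; solve_minmax)).
  replace (x + h - x) with h in Ep by ring. replace (x - h - x) with (- h) in Em by ring.
  rewrite Rabs_Ropp in Em. rewrite (Rabs_pos_eq h) in Ep, Em by lra.
  replace (cdiff2 u x h - Derive_n u 2 x) with
    ((u (x + h) - u x - h * Derive u x - h ^ 2 / 2 * Derive_n u 2 x - h ^ 3 / 6 * Derive_n u 3 x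
      + (u (x - h) - u x - - h * Derive u x - (- h) ^ 2 / 2 * Derive_n u 2 x
         - (- h) ^ 3 / 6 * Derive_n u 3 x)) / h ^ 2)
    by (unfold cdiff2; field; lra).
  apply Rabs_div_le; [apply pow_lt; lra|].
  eapply Rle_trans; [apply Rabs_plus_le; [exact Ep | exact Em] | right; field].
Qed.

(* The forward quotient and the Adams-Bashforth extrapolation [3/2 u' t - 1/2 u' (t - tau)]
   both approximate [u' (t + tau / 2)] to second order. *)
Lemma ab2_error u t tau M : 0 < tau -> ex_derive_upto u 3 ->
  (forall z, t - tau <= z <= t + tau -> Rabs (Derive_n u 3 z) <= M) ->
  Rabs ((u (t + tau) - u t) / tau - 3 / 2 * Derive u t + 1 / 2 * Derive u (t - tau))
  <= tau ^ 2 * M.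
Proof.
  intros Htau Hu HM.
  assert (B0 : 0 <= M) by exact (Rabs_le_nonneg _ M (HM t ltac:(lra))).
  assert (Ep := taylor_order2 u t (t + tau) M ltac:(lra) Hu
                  ltac:(intros z Hz; apply HM; revert Hz; solve_minmax)).
  assert (Em := taylor_order1 (Derive u) t (t - tau) M ltac:(lra) (ex_derive_upto_Derive u 2 Hu)
                  ltac:(intros z Hz; rewrite Derive_n_Derive; apply HM; revert Hz; solve_minmax)).
  change (Derive (Derive u) t) with (Derive_n u 2 t) in Em.
  replace (t + tau - t) with tau in Ep by ring. replace (t - tau - t) with (- tau) in Em by ring.
  rewrite Rabs_Ropp in Em. rewrite (Rabs_pos_eq tau) in Ep, Em by lra.
  replace ((u (t + tau) - u t) / tau - 3 / 2 * Derive u t + 1 / 2 * Derive u (t - tau))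
    with ((u (t + tau) - u t - tau * Derive u t - tau ^ 2 / 2 * Derive_n u 2 t) / tau
          + (Derive u (t - tau) - Derive u t - - tau * Derive_n u 2 t) / 2) by (field; lra).
  eapply Rle_trans; [apply Rabs_plus_le with (A := tau ^ 2 / 6 * M) (B := tau ^ 2 / 4 * M)|].
  - apply Rabs_div_le; [lra|]. eapply Rle_trans; [exact Ep | right; field].
  - apply Rabs_div_le; [lra|]. eapply Rle_trans; [exact Em | right; field].
  - assert (0 <= tau ^ 2 * M) by (apply Rmult_le_pos; [apply pow_le|]; lra). lra.
Qed.

Lemma second_diff_abs_le u t tau M : 0 < tau -> ex_derive_upto u 2 ->
  (forall z, t - tau <= z <= t + tau -> Rabs (Derive_n u 2 z) <= M) ->
  Rabs (u (t + tau) - 2 * u t + u (t - tau)) <= tau ^ 2 * M.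
Proof.
  intros Htau Hu HM.
  assert (Ep := taylor_order1 u t (t + tau) M ltac:(lra) Hu
                  ltac:(intros z Hz; apply HM; revert Hz; solve_minmax)).
  assert (Em := taylor_order1 u t (t - tau) M ltac:(lra) Hu
                  ltac:(intros z Hz; apply HM; revert Hz; solve_minmax)).
  replace (t + tau - t) with tau in Ep by ring. replace (t - tau - t) with (- tau) in Em by ring.
  rewrite Rabs_Ropp in Em. rewrite (Rabs_pos_eq tau) in Ep, Em by lra.
  replace (u (t + tau) - 2 * u t + u (t - tau)) with
    ((u (t + tau) - u t - tau * Derive u t) + (u (t - tau) - u t - - tau * Derive u t)) by ring.
  eapply Rle_trans; [apply Rabs_plus_le; [exact Ep | exact Em] | right; field].
Qed.

Lemma forward_diff_error u t tau M : 0 < tau -> ex_derive_upto u 2 ->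
  (forall z, t <= z <= t + tau -> Rabs (Derive_n u 2 z) <= M) ->
  Rabs ((u (t + tau) - u t) / tau - Derive u t) <= tau / 2 * M.
Proof.
  intros Htau Hu HM.
  assert (E := taylor_order1 u t (t + tau) M ltac:(lra) Hu
                 ltac:(intros z Hz; apply HM; revert Hz; solve_minmax)).
  replace (t + tau - t) with tau in E by ring. rewrite (Rabs_pos_eq tau) in E by lra.
  replace ((u (t + tau) - u t) / tau - Derive u t)
    with ((u (t + tau) - u t - tau * Derive u t) / tau) by (field; lra).
  apply Rabs_div_le; [lra|]. eapply Rle_trans; [exact E | right; field].
Qed.

(* Taylor expansion of the flux difference about [x]: [w_k], [v_k] stand for the
   derivatives at [x], [wp], [wm], [vp], [vm] for the values at [x + h], [x - h]. *)
Lemma flux_diff_expansion w0 w1 w2 wp wm v0 v1 v2 v3 vp vm h : h <> 0 ->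
  ((w0 + wp) / 2 * ((vp - v0) / h) - (wm + w0) / 2 * ((v0 - vm) / h)) / h - (w1 * v1 + w0 * v2)
  = h ^ 2 * (w2 * v2 / 4 + w1 * v3 / 6)
    + ((wp - w0 - h * w1 - h ^ 2 / 2 * w2) * (v1 + h / 2 * v2 + h ^ 2 / 6 * v3)
       - (wm - w0 - - h * w1 - (- h) ^ 2 / 2 * w2) * (v1 - h / 2 * v2 + h ^ 2 / 6 * v3)) / (2 * h)
    + ((w0 + wp) / 2 * (vp - v0 - h * v1 - h ^ 2 / 2 * v2 - h ^ 3 / 6 * v3)
       + (wm + w0) / 2 * (vm - v0 - - h * v1 - (- h) ^ 2 / 2 * v2 - (- h) ^ 3 / 6 * v3)) / h ^ 2.
Proof. intros. field. auto. Qed.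

Lemma flux_remainder_bound r1 r2 s1 s2 Wp Wm w1 w2 v1 v2 v3 h L Mw Mv :
  0 < h -> h <= L -> 0 <= Mw -> 0 <= Mv ->
  Rabs r1 <= h ^ 3 / 6 * Mw -> Rabs r2 <= h ^ 3 / 6 * Mw ->
  Rabs s1 <= h ^ 4 / 24 * Mv -> Rabs s2 <= h ^ 4 / 24 * Mv ->
  Rabs Wp <= Mw -> Rabs Wm <= Mw -> Rabs w1 <= Mw -> Rabs w2 <= Mw ->
  Rabs v1 <= Mv -> Rabs v2 <= Mv -> Rabs v3 <= Mv ->
  Rabs (h ^ 2 * (w2 * v2 / 4 + w1 * v3 / 6)
        + (r1 * (v1 + h / 2 * v2 + h ^ 2 / 6 * v3) - r2 * (v1 - h / 2 * v2 + h ^ 2 / 6 * v3)) / (2 * h)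
        + (Wp * s1 + Wm * s2) / h ^ 2)
  <= h ^ 2 * (Mw * Mv * (1 + L + L ^ 2)).
Proof.
  intros Hh HL Mw0 Mv0 Hr1 Hr2 Hs1 Hs2 HWp HWm Hw1 Hw2 Hv1 Hv2 Hv3.
  set (cL := 1 + L / 2 + L ^ 2 / 6).
  assert (Hh2 : Rabs (h / 2) <= L / 2) by (rewrite Rabs_pos_eq; lra).
  assert (Hh3 : Rabs (h ^ 2 / 6) <= L ^ 2 / 6).
  { rewrite Rabs_pos_eq by (apply Rmult_le_pos; [apply pow_le|]; lra).
    apply Rmult_le_compat_r; [lra|]. apply pow_incr; lra. }
  assert (HPp := Rabs_affine3_le v1 v2 v3 (h / 2) (h ^ 2 / 6) Mv (L / 2) (L ^ 2 / 6)
                   Hv1 Hv2 Hv3 Hh2 Hh3).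
  assert (HPm := Rabs_affine3_le v1 v2 v3 (- (h / 2)) (h ^ 2 / 6) Mv (L / 2) (L ^ 2 / 6)
                   Hv1 Hv2 Hv3 ltac:(now rewrite Rabs_Ropp) Hh3).
  replace (v1 + - (h / 2) * v2) with (v1 - h / 2 * v2) in HPm by ring.
  fold cL in HPp, HPm.
  assert (Hh2pos : 0 <= h ^ 2) by (apply pow_le; lra).
  apply Rle_trans with (h ^ 2 * (Mw * Mv / 4 + Mw * Mv / 6) + h ^ 2 * (Mw / 6 * (Mv * cL))
                        + h ^ 2 * (Mw * Mv / 12)).
  - apply Rabs_plus_le; [apply Rabs_plus_le|].
    + rewrite Rabs_mult, (Rabs_pos_eq (h ^ 2)) by exact Hh2pos.
      apply Rmult_le_compat_l; [exact Hh2pos|]. apply Rabs_plus_le.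
      * apply Rabs_div_le; [lra|]. eapply Rle_trans; [apply (Rabs_mult_le _ _ _ _ Hw2 Hv2) | right; field].
      * apply Rabs_div_le; [lra|]. eapply Rle_trans; [apply (Rabs_mult_le _ _ _ _ Hw1 Hv3) | right; field].
    + apply Rabs_div_le; [lra|]. unfold Rminus.
      eapply Rle_trans; [apply Rabs_plus_le; [|rewrite Rabs_Ropp]; apply Rabs_mult_le|].
      * exact Hr1.
      * exact HPp.
      * exact Hr2.
      * exact HPm.
      * right. field.
    + apply Rabs_div_le; [apply pow_lt; lra|].
      eapply Rle_trans; [apply Rabs_plus_le; apply Rabs_mult_le; eassumption | right; field].
  - assert (0 <= Mw * Mv) by (apply Rmult_le_pos; lra).
    assert (0 <= L) by lra.
    assert (0 <= L ^ 2) by apply pow2_ge_0.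
    replace (h ^ 2 * (Mw * Mv / 4 + Mw * Mv / 6) + h ^ 2 * (Mw / 6 * (Mv * cL)) + h ^ 2 * (Mw * Mv / 12))
      with (h ^ 2 * (Mw * Mv * (1 / 2 + cL / 6))) by field.
    apply Rmult_le_compat_l; [exact Hh2pos|]. apply Rmult_le_compat_l; [assumption|].
    unfold cL. lra.
Qed.

Lemma flux_diff_error w v x h L Mw Mv : 0 < h -> h <= L ->
  ex_derive_upto w 3 -> ex_derive_upto v 4 ->
  (forall z k, x - h <= z <= x + h -> (k <= 3)%nat -> Rabs (Derive_n w k z) <= Mw) ->
  (forall z k, x - h <= z <= x + h -> (k <= 4)%nat -> Rabs (Derive_n v k z) <= Mv) ->
  Rabs (flux_diff w v x h - Derive (fun s => w s * Derive v s) x)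
  <= h ^ 2 * (Mw * Mv * (1 + L + L ^ 2)).
Proof.
  intros Hh HL Hw Hv HMw HMv.
  assert (Mw0 : 0 <= Mw) by exact (Rabs_le_nonneg _ Mw (HMw x 0%nat ltac:(lra) ltac:(lia))).
  assert (Mv0 : 0 <= Mv) by exact (Rabs_le_nonneg _ Mv (HMv x 0%nat ltac:(lra) ltac:(lia))).
  assert (Rwp := taylor_order2 w x (x + h) Mw ltac:(lra) Hw
                   ltac:(intros z Hz; apply HMw; [revert Hz; solve_minmax | lia])).
  assert (Rwm := taylor_order2 w x (x - h) Mw ltac:(lra) Hw
                   ltac:(intros z Hz; apply HMw; [revert Hz; solve_minmax | lia])).
  assert (Rvp := taylor_order3 v x (x + h) Mv ltac:(lra) Hv
                   ltac:(intros z Hz; apply HMv; [revert Hz; solve_minmax | lia])).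
  assert (Rvm := taylor_order3 v x (x - h) Mv ltac:(lra) Hv
                   ltac:(intros z Hz; apply HMv; [revert Hz; solve_minmax | lia])).
  replace (x + h - x) with h in Rwp, Rvp by ring.
  replace (x - h - x) with (- h) in Rwm, Rvm by ring.
  rewrite Rabs_Ropp in Rwm, Rvm. rewrite (Rabs_pos_eq h) in Rwp, Rwm, Rvp, Rvm by lra.
  assert (Havg : forall a b, a = x \/ a = x + h \/ a = x - h -> b = x \/ b = x + h \/ b = x - h ->
            Rabs ((w a + w b) / 2) <= Mw).
  { intros a b Ha Hb. apply Rabs_div_le; [lra|].
    eapply Rle_trans; [apply Rabs_plus_le; [apply (HMw a 0%nat) | apply (HMw b 0%nat)] | right; ring];
      (lia || lra). }
  rewrite Derive_mult by (apply (Hw 1%nat) || apply (Hv 2%nat); lia).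
  unfold flux_diff.
  rewrite (flux_diff_expansion _ _ (Derive_n w 2 x) _ _ _ _ _ (Derive_n v 3 x)) by lra.
  apply flux_remainder_bound; auto;
    first [ apply Havg; lra
          | apply (HMw x 1%nat); [lra | lia] | apply (HMw x 2%nat); [lra | lia]
          | apply (HMv x 1%nat); [lra | lia] | apply (HMv x 2%nat); [lra | lia]
          | apply (HMv x 3%nat); [lra | lia] ].
Qed.

Lemma is_derive_cdiff2_shift (u u' : R -> R) x h : (forall z, is_derive u z (u' z)) ->
  is_derive (fun z => cdiff2 u z h) x (cdiff2 u' x h).
Proof.
  intros Hu. unfold cdiff2. apply is_derive_Rdiv_r, is_derive_Rplus; [apply is_derive_Rminus|].
  - apply is_derive_Rshift, Hu.
  - apply is_derive_scal, Hu.
  - apply (is_derive_Rshift u x (- h)), Hu.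
Qed.

Lemma is_derive_cdiff2_param (g g' : R -> R -> R) X h y :
  (forall a, is_derive (fun s => g a s) y (g' a y)) ->
  is_derive (fun s => cdiff2 (fun a => g a s) X h) y (cdiff2 (fun a => g' a y) X h).
Proof.
  intros Hg. unfold cdiff2.
  apply is_derive_Rdiv_r, is_derive_Rplus; [apply is_derive_Rminus; [|apply is_derive_scal]|]; auto.
Qed.

(** * Derivatives of products and reciprocals *)

Definition derivs_le (u : R -> R) (n : nat) (z M : R) : Prop :=
  forall k, (k <= n)%nat -> Rabs (Derive_n u k z) <= M.

Lemma derivs_le_nonneg u n z M : derivs_le u n z M -> 0 <= M.
Proof. intros H. exact (Rabs_le_nonneg _ M (H 0%nat (Nat.le_0_l n))). Qed.

Lemma derivs_le_weaken u n z M M' : M <= M' -> derivs_le u n z M -> derivs_le u n z M'.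
Proof. intros HM H k Hk. specialize (H k Hk). lra. Qed.

Lemma derivs_le_le u n m z M : (m <= n)%nat -> derivs_le u n z M -> derivs_le u m z M.
Proof. intros Hmn H k Hk. apply H. lia. Qed.

Lemma derivs_le_Derive u n z M : derivs_le u (S n) z M -> derivs_le (Derive u) n z M.
Proof. intros H k Hk. rewrite Derive_n_Derive. apply H. lia. Qed.

Lemma ex_derive_upto_plus u v n : ex_derive_upto u n -> ex_derive_upto v n ->
  ex_derive_upto (fun x => u x + v x) n.
Proof.
  intros Hu Hv k z Hk.
  apply ex_derive_n_plus; apply filter_forall; intros y j Hj; [apply Hu | apply Hv]; lia.
Qed.

Lemma derivs_le_plus u v n z A B : ex_derive_upto u n -> ex_derive_upto v n ->
  derivs_le u n z A -> derivs_le v n z B -> derivs_le (fun x => u x + v x) n z (A + B).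
Proof.
  intros Hu Hv HA HB k Hk. rewrite Derive_n_plus.
  - apply Rabs_plus_le; auto.
  - apply filter_forall. intros y j Hj. apply Hu. lia.
  - apply filter_forall. intros y j Hj. apply Hv. lia.
Qed.

Lemma ex_derive_upto_opp u n : ex_derive_upto u n -> ex_derive_upto (fun x => - u x) n.
Proof. intros H k z Hk. apply ex_derive_n_opp. auto. Qed.

Lemma derivs_le_opp u n z A : derivs_le u n z A -> derivs_le (fun x => - u x) n z A.
Proof. intros H k Hk. rewrite Derive_n_opp, Rabs_Ropp. auto. Qed.

Lemma Derive_n_S_is_derive f g k z : (forall x, is_derive f x (g x)) ->
  Derive_n f (S k) z = Derive_n g k z.
Proof.
  intros H. rewrite <- Derive_n_Derive. apply Derive_n_ext. intros t.
  apply is_derive_unique, H.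
Qed.

Lemma ex_derive_upto_S_is_derive f g n : (forall x, is_derive f x (g x)) ->
  ex_derive_upto g n -> ex_derive_upto f (S n).
Proof.
  intros H Hg [|[|k]] z Hk; [exact I | exists (g z); apply H |].
  apply ex_derive_ext with (f := Derive_n g k).
  - intros t. symmetry. apply (Derive_n_S_is_derive f g k t H).
  - apply (Hg (S k)). lia.
Qed.

Lemma derivs_le_S_is_derive f g n z M : (forall x, is_derive f x (g x)) ->
  Rabs (f z) <= M -> derivs_le g n z M -> derivs_le f (S n) z M.
Proof.
  intros H H0 Hg [|k] Hk; [exact H0|].
  rewrite (Derive_n_S_is_derive f g k z H). apply Hg. lia.
Qed.

Lemma is_derive_mult_upto u v n x : ex_derive_upto u (S n) -> ex_derive_upto v (S n) ->
  is_derive (fun x => u x * v x) x (Derive u x * v x + u x * Derive v x).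
Proof.
  intros Hu Hv. apply (is_derive_mult u v x).
  - exact (ex_derive_upto_is_derive u n x Hu).
  - exact (ex_derive_upto_is_derive v n x Hv).
  - intros; apply Rmult_comm.
Qed.

Lemma ex_derive_upto_mult n : forall u v, ex_derive_upto u n -> ex_derive_upto v n ->
  ex_derive_upto (fun x => u x * v x) n.
Proof.
  induction n as [|n IH]; intros u v Hu Hv.
  - intros k z Hk. replace k with 0%nat by lia. exact I.
  - apply ex_derive_upto_S_is_derive with (g := fun x => Derive u x * v x + u x * Derive v x).
    + intros x. now apply is_derive_mult_upto with n.
    + apply ex_derive_upto_plus; apply IH; auto using ex_derive_upto_Derive, ex_derive_upto_pred.
Qed.

(* Leibniz rule, with the binomial coefficients bounded by [2 ^ n]. *)
Lemma derivs_le_mult n : forall u v z A B, ex_derive_upto u n -> ex_derive_upto v n ->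
  derivs_le u n z A -> derivs_le v n z B -> derivs_le (fun x => u x * v x) n z (2 ^ n * A * B).
Proof.
  induction n as [|n IH]; intros u v z A B Hu Hv HA HB.
  - intros k Hk. replace k with 0%nat by lia. rewrite pow_O, Rmult_1_l.
    apply Rabs_mult_le; [apply (HA 0%nat) | apply (HB 0%nat)]; lia.
  - assert (A0 := derivs_le_nonneg _ _ _ _ HA). assert (B0 := derivs_le_nonneg _ _ _ _ HB).
    assert (Hu' := ex_derive_upto_le u (S n) n ltac:(lia) Hu).
    assert (Hv' := ex_derive_upto_le v (S n) n ltac:(lia) Hv).
    apply derivs_le_S_is_derive with (g := fun x => Derive u x * v x + u x * Derive v x).
    + intros x. now apply is_derive_mult_upto with n.
    + eapply Rle_trans; [apply Rabs_mult_le; [apply (HA 0%nat) | apply (HB 0%nat)]; lia|].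
      assert (1 <= 2 ^ S n) by (apply pow_R1_Rle; lra).
      assert (0 <= A * B) by nra. nra.
    + replace (2 ^ S n * A * B) with (2 ^ n * A * B + 2 ^ n * A * B) by (simpl; ring).
      apply derivs_le_plus.
      * exact (ex_derive_upto_mult n _ _ (ex_derive_upto_Derive u n Hu) Hv').
      * exact (ex_derive_upto_mult n _ _ Hu' (ex_derive_upto_Derive v n Hv)).
      * apply IH; [apply ex_derive_upto_Derive, Hu | exact Hv' | apply derivs_le_Derive, HA
                  | apply derivs_le_le with (S n); auto].
      * apply IH; [exact Hu' | apply ex_derive_upto_Derive, Hv
                  | apply derivs_le_le with (S n); auto | apply derivs_le_Derive, HB].
Qed.

(* Bounds the first [n] derivatives of [1 / q] when [q >= m > 0] and those of [q] are bounded
   by [A], via [(1/q)' = - q' (1/q) (1/q)] and the Leibniz bound above. *)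
Fixpoint inv_derivs_bound (n : nat) (m A : R) : R :=
  match n with
  | O => / m
  | S n => Rmax (/ m) (2 ^ n * A * (2 ^ n * inv_derivs_bound n m A * inv_derivs_bound n m A))
  end.

Section Reciprocal.
Variables (q : R -> R) (m : R).
Hypothesis Hm : 0 < m.
Hypothesis Hq : forall x, m <= q x.

Lemma Rabs_Rinv_le x : Rabs (/ q x) <= / m.
Proof.
  specialize (Hq x). rewrite Rabs_pos_eq by (left; apply Rinv_0_lt_compat; lra).
  apply Rinv_le_contravar; lra.
Qed.

Lemma is_derive_Rinv_upto n x : ex_derive_upto q (S n) ->
  is_derive (fun x => / q x) x (- Derive q x * (/ q x * / q x)).
Proof.
  intros Hqd. specialize (Hq x).
  replace (- Derive q x * (/ q x * / q x)) with (- Derive q x / q x ^ 2) by (field; lra).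
  apply (is_derive_inv q); [exact (ex_derive_upto_is_derive q n x Hqd) | lra].
Qed.

Lemma ex_derive_upto_Rinv n : ex_derive_upto q n -> ex_derive_upto (fun x => / q x) n.
Proof.
  induction n as [|n IH]; intros Hqd.
  - intros k z Hk. replace k with 0%nat by lia. exact I.
  - apply ex_derive_upto_S_is_derive with (g := fun x => - Derive q x * (/ q x * / q x)).
    + intros x. now apply is_derive_Rinv_upto with n.
    + assert (Hi := IH (ex_derive_upto_le q (S n) n ltac:(lia) Hqd)).
      apply ex_derive_upto_mult; [|now apply ex_derive_upto_mult].
      apply ex_derive_upto_opp, ex_derive_upto_Derive, Hqd.
Qed.

Lemma derivs_le_Rinv n z A : ex_derive_upto q n -> derivs_le q n z A ->
  derivs_le (fun x => / q x) n z (inv_derivs_bound n m A).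
Proof.
  revert z A. induction n as [|n IH]; intros z A Hqd HA.
  - intros k Hk. replace k with 0%nat by lia. apply Rabs_Rinv_le.
  - assert (Hqd' := ex_derive_upto_le q (S n) n ltac:(lia) Hqd).
    assert (Hi := ex_derive_upto_Rinv n Hqd').
    apply derivs_le_S_is_derive with (g := fun x => - Derive q x * (/ q x * / q x)).
    + intros x. now apply is_derive_Rinv_upto with n.
    + eapply Rle_trans; [apply Rabs_Rinv_le | apply Rmax_l].
    + eapply derivs_le_weaken; [apply Rmax_r|].
      apply derivs_le_mult.
      * apply ex_derive_upto_opp, ex_derive_upto_Derive, Hqd.
      * now apply ex_derive_upto_mult.
      * apply derivs_le_opp, derivs_le_Derive, HA.
      * assert (HA' := derivs_le_le q (S n) n z A ltac:(lia) HA).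
        apply derivs_le_mult; auto.
Qed.

End Reciprocal.

Lemma ex_derive_upto_minus u v n : ex_derive_upto u n -> ex_derive_upto v n ->
  ex_derive_upto (fun x => u x - v x) n.
Proof.
  intros Hu Hv k z Hk.
  apply ex_derive_n_minus; apply filter_forall; intros y j Hj; [apply Hu | apply Hv]; lia.
Qed.

Lemma Derive_n_minus_upto u v n k z : ex_derive_upto u n -> ex_derive_upto v n -> (k <= n)%nat ->
  Derive_n (fun x => u x - v x) k z = Derive_n u k z - Derive_n v k z.
Proof.
  intros Hu Hv Hk.
  apply Derive_n_minus; apply filter_forall; intros y j Hj; [apply Hu | apply Hv]; lia.
Qed.
(** * Regular functions of time and space *)

Lemma continuous3_eps (g : fun3) t x y : continuous (uncurry3 g) (t, x, y) ->
  forall eps, 0 < eps -> exists d, 0 < d /\ forall t' x' y',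
    Rabs (t' - t) < d -> Rabs (x' - x) < d -> Rabs (y' - y) < d ->
    Rabs (g t' x' y' - g t x y) < eps.
Proof.
  intros Hc eps Heps.
  destruct (proj1 (filterlim_locally _ _) Hc (mkposreal eps Heps)) as [d Hd].
  exists (pos d). split; [apply cond_pos|]. intros t' x' y' H1 H2 H3.
  apply (Hd (t', x', y')). repeat split; assumption.
Qed.

Fixpoint list_abs_max (G : Compactness.Tn 3 R -> R) (l : list (Compactness.Tn 3 R)) : R :=
  match l with
  | nil => 0
  | cons a l => Rmax (Rabs (G a) + 1) (list_abs_max G l)
  end.

Lemma list_abs_max_in G l a : List.In a l -> Rabs (G a) + 1 <= list_abs_max G l.
Proof.
  induction l as [|b l IH]; simpl; [tauto|]. intros [->|H].
  - apply Rmax_l.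
  - eapply Rle_trans; [apply IH; auto | apply Rmax_r].
Qed.

(* Cover the box by finitely many balls on which [g] oscillates by less than 1. *)
Lemma continuous3_bounded (g : fun3) a1 b1 a2 b2 a3 b3 :
  (forall t x y, continuous (uncurry3 g) (t, x, y)) ->
  exists M, forall t x y, a1 <= t <= b1 -> a2 <= x <= b2 -> a3 <= y <= b3 -> Rabs (g t x y) <= M.
Proof.
  intros Hc.
  set (G := fun z : Compactness.Tn 3 R => match z with (t, (x, (y, _))) => g t x y end).
  assert (Hd : forall z, exists d : posreal, forall w, close_n 3 d w z -> Rabs (G w - G z) < 1).
  { intros [t [x [y []]]].
    destruct (continuous3_eps g t x y (Hc t x y) 1 ltac:(lra)) as [d [Hd0 Hd]].
    exists (mkposreal d Hd0). intros [t' [x' [y' []]]] H. simpl in H |- *. apply Hd; tauto. }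
  set (delta := fun z => proj1_sig (constructive_indefinite_description _ (Hd z))).
  assert (Hdelta : forall z w, close_n 3 (delta z) w z -> Rabs (G w - G z) < 1).
  { intros z. unfold delta. now destruct (constructive_indefinite_description _ (Hd z)). }
  apply NNPP. intros Hno.
  apply (compactness_list 3 (a1, (a2, (a3, tt))) (b1, (b2, (b3, tt))) delta). intros [l Hl].
  apply Hno. exists (list_abs_max G l). intros t x y Ht Hx Hy.
  destruct (Hl (t, (x, (y, tt)))) as [z [Hin [_ Hcl]]]; [simpl; tauto|].
  pose proof (Hdelta z _ Hcl). pose proof (list_abs_max_in G l z Hin).
  change (g t x y) with (G (t, (x, (y, tt)))).
  pose proof (Rabs_triang_inv (G (t, (x, (y, tt)))) (G z)). lra.
Qed.

Lemma bound_upto (P : nat -> R -> Prop) n :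
  (forall k M M', P k M -> M <= M' -> P k M') ->
  (forall k, (k <= n)%nat -> exists M, P k M) -> exists M, forall k, (k <= n)%nat -> P k M.
Proof.
  intros Hmono H. induction n as [|n IH].
  - destruct (H 0%nat (le_n 0)) as [M HM]. exists M. intros k Hk.
    replace k with 0%nat by lia. auto.
  - destruct IH as [M1 HM1]; [intros k Hk; apply H; lia|].
    destruct (H (S n) (le_n _)) as [M2 HM2].
    exists (Rmax M1 M2). intros k Hk. destruct (Nat.eq_dec k (S n)) as [->|Hne].
    + eapply Hmono; [exact HM2 | apply Rmax_r].
    + eapply Hmono; [apply HM1; lia | apply Rmax_l].
Qed.

Definition dXY (j l : nat) (f : fun3) : fun3 := iter_op dX j (iter_op dY l f).

Lemma regular_mixed_bounded a m f a1 b1 a2 b2 a3 b3 : regular a m f ->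
  exists M, forall i j l t x y, (i <= a)%nat -> (j + l <= m)%nat ->
    a1 <= t <= b1 -> a2 <= x <= b2 -> a3 <= y <= b3 -> Rabs (mixed i j l f t x y) <= M.
Proof.
  intros (_ & _ & _ & Hc).
  set (P := fun i j l M => forall t x y,
    a1 <= t <= b1 -> a2 <= x <= b2 -> a3 <= y <= b3 -> Rabs (mixed i j l f t x y) <= M).
  assert (Mono : forall i j l M M', P i j l M -> M <= M' -> P i j l M').
  { intros i j l M M' H HM t x y Ht Hx Hy. specialize (H t x y Ht Hx Hy). lra. }
  destruct (bound_upto (fun i M => forall j, (j <= m)%nat -> forall l, (l <= m)%nat ->
                                   (j + l <= m)%nat -> P i j l M) a) as [M HM].
  - intros k M M' H HM j Hj l Hl Hjl. apply (Mono k j l M M'); auto.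
  - intros i Hi. apply (bound_upto (fun j M => forall l, (l <= m)%nat ->
                                     (j + l <= m)%nat -> P i j l M) m).
    + intros k M M' H HM l Hl Hjl. apply (Mono i k l M M'); auto.
    + intros j Hj. apply (bound_upto (fun l M => (j + l <= m)%nat -> P i j l M) m).
      * intros k M M' H HM Hjl. apply (Mono i j k M M'); auto.
      * intros l Hl. destruct (le_lt_dec (j + l) m) as [Hjl|Hjl]; [|exists 0; lia].
        destruct (continuous3_bounded (mixed i j l f) a1 b1 a2 b2 a3 b3) as [M HM].
        { intros t x y. apply Hc; auto. }
        exists M. intros _. exact HM.
  - exists M. intros i j l t x y Hi Hjl. apply (HM i Hi j ltac:(lia) l ltac:(lia) Hjl).
Qed.

Lemma iter_dX_Derive_n (f : fun3) j t x y :
  iter_op dX j f t x y = Derive_n (fun s => f t s y) j x.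
Proof.
  revert x. induction j as [|j IH]; intros x; [reflexivity|].
  apply Derive_ext. intros s. apply IH.
Qed.

Lemma iter_dY_Derive_n (f : fun3) l t x y :
  iter_op dY l f t x y = Derive_n (fun s => f t x s) l y.
Proof.
  revert y. induction l as [|l IH]; intros y; [reflexivity|].
  apply Derive_ext. intros s. apply IH.
Qed.

Lemma iter_dT_Derive_n (f : fun3) i t x y :
  iter_op dT i f t x y = Derive_n (fun s => f s x y) i t.
Proof.
  revert t. induction i as [|i IH]; intros t; [reflexivity|].
  apply Derive_ext. intros s. apply IH.
Qed.

Lemma iter_op_add op k j (f : fun3) : iter_op op (k + j) f = iter_op op k (iter_op op j f).
Proof. induction k as [|k IH]; simpl; congruence. Qed.

Lemma Derive_n_dX f k j l t x y :
  Derive_n (fun s => dXY j l f t s y) k x = dXY (k + j) l f t x y.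
Proof. unfold dXY. now rewrite iter_op_add, iter_dX_Derive_n. Qed.

Lemma Derive_n_dY f k l t x y :
  Derive_n (fun s => dXY 0 l f t x s) k y = dXY 0 (k + l) f t x y.
Proof. unfold dXY. simpl. now rewrite iter_op_add, iter_dY_Derive_n. Qed.

Lemma Derive_n_dT f i j l t x y :
  Derive_n (fun s => dXY j l f s x y) i t = mixed i j l f t x y.
Proof. symmetry. apply iter_dT_Derive_n. Qed.

Section Regular.
Variables (a m : nat) (f : fun3).
Hypothesis Hf : regular a m f.

Lemma regular_ex_dY l t x : (l <= m)%nat -> ex_derive_upto (fun s => dXY 0 l f t x s) (m - l).
Proof.
  destruct Hf as [H _]. intros Hl [|k] z Hk; [exact I|].
  apply ex_derive_ext with (f := fun s => dXY 0 (k + l) f t x s).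
  - intros s. symmetry. apply Derive_n_dY.
  - apply (H (k + l)%nat). lia.
Qed.

Lemma regular_ex_dX j l t y : (j + l <= m)%nat ->
  ex_derive_upto (fun s => dXY j l f t s y) (m - l - j).
Proof.
  destruct Hf as [_ [H _]]. intros Hjl [|k] z Hk; [exact I|].
  apply ex_derive_ext with (f := fun s => dXY (k + j) l f t s y).
  - intros s. symmetry. apply Derive_n_dX.
  - apply H. lia.
Qed.

Lemma regular_ex_dT j l x y : (j + l <= m)%nat -> ex_derive_upto (fun s => dXY j l f s x y) a.
Proof.
  destruct Hf as [_ [_ [H _]]]. intros Hjl [|k] z Hk; [exact I|].
  apply ex_derive_ext with (f := fun s => mixed k j l f s x y).
  - intros s. symmetry. apply Derive_n_dT.
  - apply H; lia.
Qed.

Lemma regular_continuous i j l t x y : (i <= a)%nat -> (j + l <= m)%nat ->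
  continuous (uncurry3 (mixed i j l f)) (t, x, y).
Proof. destruct Hf as [_ [_ [_ H]]]. auto. Qed.

Lemma is_derive_dX j l s x y : (S j + l <= m)%nat ->
  is_derive (fun z => dXY j l f s z y) x (dXY (S j) l f s x y).
Proof.
  intros Hjl. apply Derive_correct.
  apply (regular_ex_dX j l s y ltac:(lia) 1%nat x). lia.
Qed.

Lemma is_derive_dY l s x y : (S l <= m)%nat ->
  is_derive (fun z => dXY 0 l f s x z) y (dXY 0 (S l) f s x y).
Proof.
  intros Hl. apply Derive_correct.
  apply (regular_ex_dY l s x ltac:(lia) 1%nat y). lia.
Qed.

Lemma regular_ex_derive_dT j l s x y : (1 <= a)%nat -> (j + l <= m)%nat ->
  ex_derive (fun s => dXY j l f s x y) s.
Proof. intros Ha Hjl. apply (regular_ex_dT j l x y Hjl 1%nat s Ha). Qed.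

Lemma regular_ex_derive_dX j l t x y : (S j + l <= m)%nat ->
  ex_derive (fun s => dXY j l f t s y) x.
Proof. intros Hjl. eexists. now apply is_derive_dX. Qed.

Lemma regular_ex_derive_dY l t x y : (S l <= m)%nat ->
  ex_derive (fun s => dXY 0 l f t x s) y.
Proof. intros Hl. eexists. now apply is_derive_dY. Qed.

Lemma is_derive_dT_dX t x y : (1 <= a)%nat -> (1 <= m)%nat ->
  is_derive (fun z => dT f t z y) x (dT (dX f) t x y).
Proof.
  intros Ha Hm. apply (clairaut (fun s z => f s z y) t x).
  - intros s z. apply (regular_ex_derive_dX 0 0); lia.
  - intros s z. apply (regular_ex_derive_dT 0 0); lia.
  - intros s z. apply (regular_ex_derive_dT 1 0); lia.
  - intros eps Heps.
    destruct (continuous3_eps _ t x y (regular_continuous 1 1 0 t x y Ha ltac:(lia)) eps Heps)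
      as [d [Hd H]].
    exists d. split; auto. intros s z Hs Hz. apply H; auto. rewrite Rminus_diag, Rabs_R0. auto.
Qed.

Lemma is_derive_dT_dY t x y : (1 <= a)%nat -> (1 <= m)%nat ->
  is_derive (fun z => dT f t x z) y (dT (dY f) t x y).
Proof.
  intros Ha Hm. apply (clairaut (fun s z => f s x z) t y).
  - intros s z. apply (regular_ex_derive_dY 0); lia.
  - intros s z. apply (regular_ex_derive_dT 0 0); lia.
  - intros s z. apply (regular_ex_derive_dT 0 1); lia.
  - intros eps Heps.
    destruct (continuous3_eps _ t x y (regular_continuous 1 0 1 t x y Ha ltac:(lia)) eps Heps)
      as [d [Hd H]].
    exists d. split; auto. intros s z Hs Hz. apply H; auto. rewrite Rminus_diag, Rabs_R0. auto.
Qed.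

Lemma is_derive_dX_dY t x y : (2 <= m)%nat ->
  is_derive (fun z => dX f t x z) y (dX (dY f) t x y).
Proof.
  intros Hm. apply (clairaut (fun s z => f t s z) x y).
  - intros s z. apply (regular_ex_derive_dY 0); lia.
  - intros s z. apply (regular_ex_derive_dX 0 0); lia.
  - intros s z. apply (regular_ex_derive_dX 0 1); lia.
  - intros eps Heps.
    destruct (continuous3_eps _ t x y (regular_continuous 0 1 1 t x y ltac:(lia) ltac:(lia)) eps Heps)
      as [d [Hd H]].
    exists d. split; auto. intros s z Hs Hz. apply H; auto. rewrite Rminus_diag, Rabs_R0. auto.
Qed.

Lemma is_derive_dX2_dY t x y : (3 <= m)%nat ->
  is_derive (fun z => dXY 2 0 f t x z) y (dXY 2 1 f t x y).
Proof.
  intros Hm.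
  assert (E : forall s z, Derive (fun b => dX f t s b) z = dX (dY f) t s z).
  { intros s z. apply is_derive_unique, is_derive_dX_dY. lia. }
  change (is_derive (fun z => Derive (fun s => dX f t s z) x) y (dX (dX (dY f)) t x y)).
  replace (dX (dX (dY f)) t x y) with (Derive (fun s => Derive (fun z => dX f t s z) y) x)
    by (apply Derive_ext; intros s; apply E).
  apply (clairaut (fun s z => dX f t s z) x y).
  - intros s z. eexists. apply is_derive_dX_dY. lia.
  - intros s z. apply (regular_ex_derive_dX 1 0); lia.
  - intros s z. apply ex_derive_ext with (f := fun s => dX (dY f) t s z).
    + intros s'. symmetry. apply E.
    + apply (regular_ex_derive_dX 1 1); lia.
  - intros eps Heps.
    destruct (continuous3_eps _ t x y (regular_continuous 0 2 1 t x y ltac:(lia) ltac:(lia)) eps Heps)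
      as [d [Hd H]].
    exists d. split; auto. intros s z Hs Hz.
    rewrite (Derive_ext (fun s0 => Derive (fun z0 => dX f t s0 z0) z) (fun s0 => dX (dY f) t s0 z))
      by (intros; apply E).
    rewrite (Derive_ext (fun s0 => Derive (fun z0 => dX f t s0 z0) y) (fun s0 => dX (dY f) t s0 y))
      by (intros; apply E).
    apply H; auto. rewrite Rminus_diag, Rabs_R0. auto.
Qed.

End Regular.

Lemma periodic3_dX L f : periodic3 L f -> periodic3 L (dX f).
Proof.
  intros H t x y. unfold dX. split.
  - change (Derive_n (fun s => f t s y) 1 (x + L) = Derive (fun s => f t s y) x).
    rewrite <- Derive_n_comp_trans. apply Derive_ext. intros s. apply H.
  - apply Derive_ext. intros s. apply H.
Qed.

Lemma periodic3_dY L f : periodic3 L f -> periodic3 L (dY f).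
Proof.
  intros H t x y. unfold dY. split.
  - apply Derive_ext. intros s. apply H.
  - change (Derive_n (fun s => f t x s) 1 (y + L) = Derive (fun s => f t x s) y).
    rewrite <- Derive_n_comp_trans. apply Derive_ext. intros s. apply H.
Qed.

Lemma periodic3_dT L f : periodic3 L f -> periodic3 L (dT f).
Proof. intros H t x y. unfold dT. split; apply Derive_ext; intros s; apply H. Qed.

Lemma periodic3_zero_extend (G : fun3) L a b t : 0 < L -> periodic3 L G ->
  (forall x y, a <= x <= a + L -> b <= y <= b + L -> G t x y = 0) ->
  forall x y, a <= x <= a + 2 * L -> b <= y <= b + 2 * L -> G t x y = 0.
Proof.
  intros HL HG H0.
  assert (Hx : forall x y, a <= x <= a + 2 * L -> b <= y <= b + L -> G t x y = 0).
  { intros x y Hx Hy. destruct (Rle_lt_dec x (a + L)); [apply H0; lra|].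
    replace x with ((x - L) + L) by ring. rewrite (proj1 (HG t (x - L) y)). apply H0; lra. }
  intros x y Hx' Hy. destruct (Rle_lt_dec y (b + L)); [apply Hx; lra|].
  replace y with ((y - L) + L) by ring. rewrite (proj2 (HG t x (y - L))). apply Hx; lra.
Qed.

(** * Grid operators and discrete norms *)

Definition lap5 (F : R -> R -> R) (X Y h : R) : R :=
  cdiff2 (fun s => F s Y) X h + cdiff2 (fun s => F X s) Y h.

Definition div_flux (W V : R -> R -> R) (X Y h : R) : R :=
  flux_diff (fun s => W s Y) (fun s => V s Y) X h + flux_diff (fun s => W X s) (fun s => V X s) Y h.

Lemma IZR_succ_mul a z h : a + IZR (z + 1) * h = a + IZR z * h + h.
Proof. rewrite plus_IZR. ring. Qed.

Lemma IZR_pred_mul a z h : a + IZR (z - 1) * h = a + IZR z * h - h.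
Proof. rewrite minus_IZR. ring. Qed.

Lemma lap_restr a b h F i j : h <> 0 ->
  lap h (restr a b h F) i j = lap5 F (a + IZR i * h) (b + IZR j * h) h.
Proof.
  intros Hh. unfold lap, dxg, Dxg, dyg, Dyg, lap5, cdiff2, restr.
  rewrite !Z.sub_add, !IZR_succ_mul, !IZR_pred_mul. field. auto.
Qed.

Lemma lap_plus h u v i j : lap h (fun a b => u a b + v a b) i j = lap h u i j + lap h v i j.
Proof. unfold lap, dxg, Dxg, dyg, Dyg, Rdiv. ring. Qed.

Lemma divwgrad_restr a b h W V i j :
  divwgrad h (restr a b h W) (restr a b h V) i j
  = div_flux W V (a + IZR i * h) (b + IZR j * h) h.
Proof.
  unfold divwgrad, dxg, dyg, avgx, avgy, Dxg, Dyg, div_flux, flux_diff, restr.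
  now rewrite !Z.sub_add, !IZR_succ_mul, !IZR_pred_mul.
Qed.

Lemma grid_point_bounds a N h k : (1 <= k <= N)%nat -> 0 < h ->
  a <= a + IZR (Z.of_nat k) * h <= a + INR N * h.
Proof.
  intros Hk Hh. rewrite <- INR_IZR_INZ.
  assert (1 <= INR k <= INR N) by (split; [apply (le_INR 1 k) | apply le_INR]; lia).
  split; nra.
Qed.

Lemma sumN_le n f c : (forall a, (1 <= a <= n)%nat -> f a <= c) -> sumN n f <= INR n * c.
Proof.
  induction n as [|n IH]; intros H; simpl sumN.
  - simpl. lra.
  - rewrite S_INR.
    assert (sumN n f <= INR n * c) by (apply IH; intros; apply H; lia).
    assert (f (S n) <= c) by (apply H; lia). lra.
Qed.

Lemma gsum_le N u c :
  (forall a b, (1 <= a <= N)%nat -> (1 <= b <= N)%nat -> u (Z.of_nat a) (Z.of_nat b) <= c) ->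
  gsum N u <= INR N * (INR N * c).
Proof.
  intros H. unfold gsum. apply sumN_le. intros a Ha. apply sumN_le. intros b Hb. auto.
Qed.

Lemma sqrt_le_of_le_sq x y : 0 <= y -> x <= y ^ 2 -> sqrt x <= y.
Proof. intros Hy H. rewrite <- (sqrt_pow2 y Hy). now apply sqrt_le_1_alt. Qed.

Lemma sq_le_of_abs_le a K : Rabs a <= K -> a * a <= K * K.
Proof. intros H. apply Rabs_le_between in H. nra. Qed.

Section GridNorms.
Variables (N : nat) (h K : R) (u : grid).
Hypothesis Hh : 0 < h.
Hypothesis HK : 0 <= K.
Hypothesis Hu : forall a b, (1 <= a <= N)%nat -> (1 <= b <= N)%nat ->
  Rabs (u (Z.of_nat a) (Z.of_nat b)) <= K.

Lemma inner_self_le : inner N h u u <= (INR N * h * K) ^ 2.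
Proof.
  unfold inner.
  assert (G : gsum N (fun i j => u i j * u i j) <= INR N * (INR N * (K * K)))
    by (apply gsum_le; intros a b Ha Hb; apply sq_le_of_abs_le; auto).
  assert (0 <= h ^ 2) by (apply pow_le; lra).
  apply Rle_trans with (h ^ 2 * (INR N * (INR N * (K * K)))); [now apply Rmult_le_compat_l|].
  right. ring.
Qed.

Lemma normL2_le : normL2 N h u <= INR N * h * K.
Proof.
  pose proof (pos_INR N).
  apply sqrt_le_of_le_sq; [apply Rmult_le_pos; [apply Rmult_le_pos|]; lra | apply inner_self_le].
Qed.

Lemma normH1_le :
  (forall a b, (1 <= a <= N)%nat -> (1 <= b <= N)%nat -> Rabs (Dxg h u (Z.of_nat a) (Z.of_nat b)) <= K) ->
  (forall a b, (1 <= a <= N)%nat -> (1 <= b <= N)%nat -> Rabs (Dyg h u (Z.of_nat a) (Z.of_nat b)) <= K) ->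
  normH1 N h u <= 2 * (INR N * h * K).
Proof.
  intros Hx Hy. pose proof (pos_INR N).
  assert (G : gsum N (fun i j => Dxg h u i j ^ 2 + Dyg h u i j ^ 2) <= INR N * (INR N * (2 * (K * K)))).
  { apply gsum_le. intros a b Ha Hb. simpl. rewrite !Rmult_1_r.
    pose proof (sq_le_of_abs_le _ _ (Hx a b Ha Hb)).
    pose proof (sq_le_of_abs_le _ _ (Hy a b Ha Hb)). lra. }
  assert (0 <= h ^ 2) by (apply pow_le; lra).
  assert (0 <= (INR N * h * K) ^ 2) by apply pow2_ge_0.
  apply sqrt_le_of_le_sq; [apply Rmult_le_pos; [lra | apply Rmult_le_pos; [apply Rmult_le_pos|]; lra]|].
  pose proof inner_self_le. unfold gradsq.
  apply Rle_trans with ((INR N * h * K) ^ 2 + h ^ 2 * (INR N * (INR N * (2 * (K * K))))).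
  - apply Rplus_le_compat; [lra | now apply Rmult_le_compat_l].
  - replace (h ^ 2 * (INR N * (INR N * (2 * (K * K))))) with (2 * (INR N * h * K) ^ 2) by ring.
    replace ((2 * (INR N * h * K)) ^ 2) with (4 * (INR N * h * K) ^ 2) by ring. lra.
Qed.

End GridNorms.

Lemma normL2_le_residual N h (u : grid) (F : R -> R -> R) a0 b0 K : 0 < h -> 0 <= K ->
  (forall i j, 0 <= IZR i * h <= INR N * h -> 0 <= IZR j * h <= INR N * h ->
     u i j = F (a0 + IZR i * h) (b0 + IZR j * h)) ->
  (forall X Y, a0 <= X <= a0 + INR N * h -> b0 <= Y <= b0 + INR N * h -> Rabs (F X Y) <= K) ->
  normL2 N h u <= INR N * h * K.
Proof.
  intros Hh HK Hu HF. apply normL2_le; auto. intros a b Ha Hb.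
  pose proof (grid_point_bounds 0 N h a Ha Hh). pose proof (grid_point_bounds 0 N h b Hb Hh).
  rewrite Hu by lra. apply HF; apply grid_point_bounds; auto.
Qed.

Lemma normH1_le_residual N h (u : grid) (F : R -> R -> R) a0 b0 K : 0 < h -> 0 <= K ->
  (forall i j, 0 <= IZR i * h <= INR N * h + h -> 0 <= IZR j * h <= INR N * h + h ->
     u i j = F (a0 + IZR i * h) (b0 + IZR j * h)) ->
  (forall X Y, a0 <= X <= a0 + INR N * h -> b0 <= Y <= b0 + INR N * h ->
     Rabs (F X Y) <= K /\ Rabs (F (X + h) Y - F X Y) <= h * K /\ Rabs (F X (Y + h) - F X Y) <= h * K) ->
  normH1 N h u <= 2 * (INR N * h * K).
Proof.
  intros Hh HK Hu HF.
  assert (Hg : forall a, (1 <= a <= N)%nat ->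
            0 <= IZR (Z.of_nat a) * h <= INR N * h /\ 0 <= IZR (Z.of_nat a + 1) * h <= INR N * h + h).
  { intros a Ha. pose proof (grid_point_bounds 0 N h a Ha Hh).
    rewrite plus_IZR. lra. }
  apply normH1_le; auto; intros a b Ha Hb;
    destruct (Hg a Ha) as [Ha0 Ha1]; destruct (Hg b Hb) as [Hb0 Hb1];
    destruct (HF (a0 + IZR (Z.of_nat a) * h) (b0 + IZR (Z.of_nat b) * h)) as (H0 & Hx & Hy);
    try lra.
  - rewrite Hu by lra. exact H0.
  - unfold Dxg. rewrite !Hu by lra. rewrite IZR_succ_mul. apply Rabs_div_le; [exact Hh | lra].
  - unfold Dyg. rewrite !Hu by lra. rewrite IZR_succ_mul. apply Rabs_div_le; [exact Hh | lra].
Qed.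

Lemma tk_S_add1 tau k : tk tau (S k + 1) = tk tau (S k) + tau.
Proof. unfold tk. rewrite Nat.add_1_r, (S_INR (S k)). ring. Qed.

Lemma tk_S_sub1 tau k : tk tau (S k - 1) = tk tau (S k) - tau.
Proof. unfold tk. rewrite Nat.sub_1_r, (S_INR k). simpl. ring. Qed.

(** * Residuals of the time and space stencils *)

Definition lapc (f : fun3) : fun3 := fun t x y => dXY 2 0 f t x y + dXY 0 2 f t x y.

Definition lap_err (f : fun3) (h t x y : R) : R := lap5 (f t) x y h - lapc f t x y.

Definition ab2_res (f : fun3) (tau t x y : R) : R :=
  (f (t + tau) x y - f t x y) / tau - 3 / 2 * dT f t x y + 1 / 2 * dT f (t - tau) x y.

Definition euler_res (f : fun3) (tau x y : R) : R := (f tau x y - f 0 x y) / tau - dT f 0 x y.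

Definition tdiff2 (g : fun3) (tau t x y : R) : R := g (t + tau) x y - 2 * g t x y + g (t - tau) x y.

Definition tincr (g : fun3) (tau x y : R) : R := g tau x y - g 0 x y.

Section Residuals.
Variables (f : fun3) (m : nat) (T x0 x1 y0 y1 M : R).
Hypothesis Hf : regular 3 m f.
Hypothesis HM : forall i j l t x y, (i <= 3)%nat -> (j + l <= m)%nat ->
  0 <= t <= T -> x0 <= x <= x1 -> y0 <= y <= y1 -> Rabs (mixed i j l f t x y) <= M.

Lemma Derive_n_dT_abs_le j l k t X Y : (k <= 3)%nat -> (j + l <= m)%nat ->
  0 <= t <= T -> x0 <= X <= x1 -> y0 <= Y <= y1 ->
  Rabs (Derive_n (fun s => dXY j l f s X Y) k t) <= M.
Proof. intros. rewrite Derive_n_dT. auto. Qed.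

Lemma dXY_abs_le j l t X Y : (j + l <= m)%nat ->
  0 <= t <= T -> x0 <= X <= x1 -> y0 <= Y <= y1 -> Rabs (dXY j l f t X Y) <= M.
Proof. intros. apply (HM 0%nat); auto; lia. Qed.

Lemma ab2_res_abs_le j l t tau X Y : (j + l <= m)%nat -> 0 < tau -> 0 <= t - tau -> t + tau <= T ->
  x0 <= X <= x1 -> y0 <= Y <= y1 -> Rabs (ab2_res (dXY j l f) tau t X Y) <= tau ^ 2 * M.
Proof.
  intros Hjl Htau H0 H1 HX HY.
  apply (ab2_error (fun s => dXY j l f s X Y)); [lra | now apply (regular_ex_dT 3 m f Hf) |].
  intros z Hz. apply Derive_n_dT_abs_le; auto; lra.
Qed.

Lemma euler_res_abs_le j l tau X Y : (j + l <= m)%nat -> 0 < tau -> tau <= T ->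
  x0 <= X <= x1 -> y0 <= Y <= y1 -> Rabs (euler_res (dXY j l f) tau X Y) <= tau / 2 * M.
Proof.
  intros Hjl Htau H1 HX HY.
  pose proof (forward_diff_error (fun s => dXY j l f s X Y) 0 tau M Htau) as H.
  rewrite Rplus_0_l in H. apply H.
  - apply (ex_derive_upto_le _ 3); [lia | now apply (regular_ex_dT 3 m f Hf)].
  - intros z Hz. apply Derive_n_dT_abs_le; auto; lra.
Qed.

Lemma tdiff2_abs_le j l t tau X Y : (j + l <= m)%nat -> 0 < tau -> 0 <= t - tau -> t + tau <= T ->
  x0 <= X <= x1 -> y0 <= Y <= y1 -> Rabs (tdiff2 (dXY j l f) tau t X Y) <= tau ^ 2 * M.
Proof.
  intros Hjl Htau H0 H1 HX HY.
  apply (second_diff_abs_le (fun s => dXY j l f s X Y)); [lra | |].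
  - apply (ex_derive_upto_le _ 3); [lia | now apply (regular_ex_dT 3 m f Hf)].
  - intros z Hz. apply Derive_n_dT_abs_le; auto; lra.
Qed.

Lemma tincr_abs_le j l tau X Y : (j + l <= m)%nat -> 0 < tau -> tau <= T ->
  x0 <= X <= x1 -> y0 <= Y <= y1 -> Rabs (tincr (dXY j l f) tau X Y) <= tau * M.
Proof.
  intros Hjl Htau H1 HX HY. unfold tincr.
  pose proof (increment_abs_le (fun s => dXY j l f s X Y) (Derive (fun s => dXY j l f s X Y))
                0 tau M Htau) as H.
  rewrite Rplus_0_l in H. apply H.
  - intros z. apply Derive_correct, (regular_ex_derive_dT 3 m f Hf); lia.
  - intros z Hz. apply (Derive_n_dT_abs_le j l 1); auto; lra.
Qed.

Lemma cdiff2_x_error j l t X Y h : (j + l + 4 <= m)%nat -> 0 < h -> 0 <= t <= T ->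
  x0 <= X - h -> X + h <= x1 -> y0 <= Y <= y1 ->
  Rabs (cdiff2 (fun s => dXY j l f t s Y) X h - dXY (2 + j) l f t X Y) <= h ^ 2 / 12 * M.
Proof.
  intros Hm Hh Ht HX0 HX1 HY. rewrite <- Derive_n_dX.
  apply cdiff2_error; [lra | |].
  - apply (ex_derive_upto_le _ (m - l - j)); [lia | now apply regular_ex_dX with 3%nat; [|lia]].
  - intros z Hz. rewrite Derive_n_dX. apply dXY_abs_le; auto; [lia | lra].
Qed.

Lemma cdiff2_y_error l t X Y h : (l + 4 <= m)%nat -> 0 < h -> 0 <= t <= T ->
  x0 <= X <= x1 -> y0 <= Y - h -> Y + h <= y1 ->
  Rabs (cdiff2 (fun s => dXY 0 l f t X s) Y h - dXY 0 (2 + l) f t X Y) <= h ^ 2 / 12 * M.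
Proof.
  intros Hm Hh Ht HX HY0 HY1. rewrite <- Derive_n_dY.
  apply cdiff2_error; [lra | |].
  - apply (ex_derive_upto_le _ (m - l)); [lia | now apply regular_ex_dY with 3%nat; [|lia]].
  - intros z Hz. rewrite Derive_n_dY. apply dXY_abs_le; auto; [lia | lra].
Qed.

Lemma lap_err_abs_le t X Y h : (4 <= m)%nat -> 0 < h -> 0 <= t <= T ->
  x0 <= X - h -> X + h <= x1 -> y0 <= Y - h -> Y + h <= y1 ->
  Rabs (lap_err f h t X Y) <= h ^ 2 / 6 * M.
Proof.
  intros Hm Hh Ht HX0 HX1 HY0 HY1.
  unfold lap_err, lap5, lapc.
  replace (h ^ 2 / 6 * M) with (h ^ 2 / 12 * M + h ^ 2 / 12 * M) by field.
  eapply Rle_trans; [|apply Rabs_plus_le;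
    [apply (cdiff2_x_error 0 0 t X Y h) | apply (cdiff2_y_error 0 t X Y h)]]; try (lia || lra).
  right. f_equal. unfold dXY. simpl. ring.
Qed.

Lemma tdiff2_plus g1 g2 tau t x y :
  tdiff2 (fun s x y => g1 s x y + g2 s x y) tau t x y = tdiff2 g1 tau t x y + tdiff2 g2 tau t x y.
Proof. unfold tdiff2. ring. Qed.

Lemma tincr_plus g1 g2 tau x y :
  tincr (fun s x y => g1 s x y + g2 s x y) tau x y = tincr g1 tau x y + tincr g2 tau x y.
Proof. unfold tincr. ring. Qed.

Lemma lapc_tdiff2_abs_le t tau X Y : (2 <= m)%nat -> 0 < tau -> 0 <= t - tau -> t + tau <= T ->
  x0 <= X <= x1 -> y0 <= Y <= y1 -> Rabs (tdiff2 (lapc f) tau t X Y) <= 2 * (tau ^ 2 * M).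
Proof.
  intros. unfold lapc. rewrite tdiff2_plus, <- Rplus_diag.
  apply Rabs_plus_le; apply tdiff2_abs_le; auto; lia.
Qed.

Lemma lapc_tincr_abs_le tau X Y : (2 <= m)%nat -> 0 < tau -> tau <= T ->
  x0 <= X <= x1 -> y0 <= Y <= y1 -> Rabs (tincr (lapc f) tau X Y) <= 2 * (tau * M).
Proof.
  intros. unfold lapc. rewrite tincr_plus, <- Rplus_diag.
  apply Rabs_plus_le; apply tincr_abs_le; auto; lia.
Qed.

Lemma is_derive_lapc_x s x y : (3 <= m)%nat ->
  is_derive (fun z => lapc f s z y) x (dXY 3 0 f s x y + dXY 1 2 f s x y).
Proof. intros. apply is_derive_Rplus; apply (is_derive_dX 3 m f Hf); lia. Qed.

Lemma is_derive_lapc_y s x y : (3 <= m)%nat ->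
  is_derive (fun z => lapc f s x z) y (dXY 2 1 f s x y + dXY 0 3 f s x y).
Proof.
  intros. apply is_derive_Rplus.
  - now apply (is_derive_dX2_dY 3 m f Hf).
  - apply (is_derive_dY 3 m f Hf). lia.
Qed.

Section Increments.
Variables (X Y h : R).
Hypothesis Hh : 0 < h.
Hypothesis HX : x0 <= X - h /\ X + 2 * h <= x1.
Hypothesis HY : y0 <= Y - h /\ Y + 2 * h <= y1.

Lemma ab2_res_dx t tau : (1 <= m)%nat -> 0 < tau -> 0 <= t - tau -> t + tau <= T ->
  Rabs (ab2_res f tau t (X + h) Y - ab2_res f tau t X Y) <= h * (tau ^ 2 * M).
Proof.
  intros Hm Htau H0 H1.
  apply (increment_abs_le (fun x => ab2_res f tau t x Y) (fun x => ab2_res (dXY 1 0 f) tau t x Y));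
    [exact Hh | |].
  - intros x. apply is_derive_Rplus; [apply is_derive_Rminus|].
    + apply is_derive_Rdiv_r, is_derive_Rminus; apply (is_derive_dX 3 m f Hf 0 0); lia.
    + apply is_derive_scal, (is_derive_dT_dX 3 m f Hf); lia.
    + apply is_derive_scal, (is_derive_dT_dX 3 m f Hf); lia.
  - intros z Hz. apply ab2_res_abs_le; auto; lra.
Qed.

Lemma ab2_res_dy t tau : (1 <= m)%nat -> 0 < tau -> 0 <= t - tau -> t + tau <= T ->
  Rabs (ab2_res f tau t X (Y + h) - ab2_res f tau t X Y) <= h * (tau ^ 2 * M).
Proof.
  intros Hm Htau H0 H1.
  apply (increment_abs_le (fun y => ab2_res f tau t X y) (fun y => ab2_res (dXY 0 1 f) tau t X y));
    [exact Hh | |].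
  - intros y. apply is_derive_Rplus; [apply is_derive_Rminus|].
    + apply is_derive_Rdiv_r, is_derive_Rminus; apply (is_derive_dY 3 m f Hf 0); lia.
    + apply is_derive_scal, (is_derive_dT_dY 3 m f Hf); lia.
    + apply is_derive_scal, (is_derive_dT_dY 3 m f Hf); lia.
  - intros z Hz. apply ab2_res_abs_le; auto; lra.
Qed.

Lemma euler_res_dx tau : (1 <= m)%nat -> 0 < tau -> tau <= T ->
  Rabs (euler_res f tau (X + h) Y - euler_res f tau X Y) <= h * (tau / 2 * M).
Proof.
  intros Hm Htau H1.
  apply (increment_abs_le (fun x => euler_res f tau x Y) (fun x => euler_res (dXY 1 0 f) tau x Y));
    [exact Hh | |].
  - intros x. apply is_derive_Rminus.
    + apply is_derive_Rdiv_r, is_derive_Rminus; apply (is_derive_dX 3 m f Hf 0 0); lia.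
    + apply (is_derive_dT_dX 3 m f Hf); lia.
  - intros z Hz. apply euler_res_abs_le; auto; lra.
Qed.

Lemma euler_res_dy tau : (1 <= m)%nat -> 0 < tau -> tau <= T ->
  Rabs (euler_res f tau X (Y + h) - euler_res f tau X Y) <= h * (tau / 2 * M).
Proof.
  intros Hm Htau H1.
  apply (increment_abs_le (fun y => euler_res f tau X y) (fun y => euler_res (dXY 0 1 f) tau X y));
    [exact Hh | |].
  - intros y. apply is_derive_Rminus.
    + apply is_derive_Rdiv_r, is_derive_Rminus; apply (is_derive_dY 3 m f Hf 0); lia.
    + apply (is_derive_dT_dY 3 m f Hf); lia.
  - intros z Hz. apply euler_res_abs_le; auto; lra.
Qed.

Lemma lapc_tdiff2_dx t tau : (3 <= m)%nat -> 0 < tau -> 0 <= t - tau -> t + tau <= T ->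
  Rabs (tdiff2 (lapc f) tau t (X + h) Y - tdiff2 (lapc f) tau t X Y) <= h * (2 * (tau ^ 2 * M)).
Proof.
  intros Hm Htau H0 H1.
  apply (increment_abs_le (fun x => tdiff2 (lapc f) tau t x Y)
           (fun x => tdiff2 (fun s x y => dXY 3 0 f s x y + dXY 1 2 f s x y) tau t x Y));
    [exact Hh | |].
  - intros x. unfold tdiff2.
    apply is_derive_Rplus; [apply is_derive_Rminus; [|apply is_derive_scal]|];
      now apply is_derive_lapc_x.
  - intros z Hz. rewrite tdiff2_plus, <- Rplus_diag.
    apply Rabs_plus_le; apply tdiff2_abs_le; auto; (lia || lra).
Qed.

Lemma lapc_tdiff2_dy t tau : (3 <= m)%nat -> 0 < tau -> 0 <= t - tau -> t + tau <= T ->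
  Rabs (tdiff2 (lapc f) tau t X (Y + h) - tdiff2 (lapc f) tau t X Y) <= h * (2 * (tau ^ 2 * M)).
Proof.
  intros Hm Htau H0 H1.
  apply (increment_abs_le (fun y => tdiff2 (lapc f) tau t X y)
           (fun y => tdiff2 (fun s x y => dXY 2 1 f s x y + dXY 0 3 f s x y) tau t X y));
    [exact Hh | |].
  - intros y. unfold tdiff2.
    apply is_derive_Rplus; [apply is_derive_Rminus; [|apply is_derive_scal]|];
      now apply is_derive_lapc_y.
  - intros z Hz. rewrite tdiff2_plus, <- Rplus_diag.
    apply Rabs_plus_le; apply tdiff2_abs_le; auto; (lia || lra).
Qed.

Lemma lapc_tincr_dx tau : (3 <= m)%nat -> 0 < tau -> tau <= T ->
  Rabs (tincr (lapc f) tau (X + h) Y - tincr (lapc f) tau X Y) <= h * (2 * (tau * M)).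
Proof.
  intros Hm Htau H1.
  apply (increment_abs_le (fun x => tincr (lapc f) tau x Y)
           (fun x => tincr (fun s x y => dXY 3 0 f s x y + dXY 1 2 f s x y) tau x Y));
    [exact Hh | |].
  - intros x. apply is_derive_Rminus; now apply is_derive_lapc_x.
  - intros z Hz. rewrite tincr_plus, <- Rplus_diag.
    apply Rabs_plus_le; apply tincr_abs_le; auto; (lia || lra).
Qed.

Lemma lapc_tincr_dy tau : (3 <= m)%nat -> 0 < tau -> tau <= T ->
  Rabs (tincr (lapc f) tau X (Y + h) - tincr (lapc f) tau X Y) <= h * (2 * (tau * M)).
Proof.
  intros Hm Htau H1.
  apply (increment_abs_le (fun y => tincr (lapc f) tau X y)
           (fun y => tincr (fun s x y => dXY 2 1 f s x y + dXY 0 3 f s x y) tau X y));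
    [exact Hh | |].
  - intros y. apply is_derive_Rminus; now apply is_derive_lapc_y.
  - intros z Hz. rewrite tincr_plus, <- Rplus_diag.
    apply Rabs_plus_le; apply tincr_abs_le; auto; (lia || lra).
Qed.

Lemma lap_err_x_part_dx t : (5 <= m)%nat -> 0 <= t <= T ->
  Rabs ((cdiff2 (fun s => f t s Y) (X + h) h - dXY 2 0 f t (X + h) Y)
        - (cdiff2 (fun s => f t s Y) X h - dXY 2 0 f t X Y)) <= h * (h ^ 2 / 12 * M).
Proof.
  intros Hm Ht.
  apply (increment_abs_le (fun x => cdiff2 (fun s => f t s Y) x h - dXY 2 0 f t x Y)
           (fun x => cdiff2 (fun s => dXY 1 0 f t s Y) x h - dXY 3 0 f t x Y)); [exact Hh | |].
  - intros x. apply is_derive_Rminus.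
    + apply is_derive_cdiff2_shift. intros z. apply (is_derive_dX 3 m f Hf 0 0); lia.
    + apply (is_derive_dX 3 m f Hf 2 0); lia.
  - intros z Hz. apply (cdiff2_x_error 1 0); (lia || lra).
Qed.

(* The [x]-derivative of the [y]-stencil involves [d_y^4 d_x f], which is not among the
   controlled derivatives; difference in [x] before applying the [y]-stencil instead. *)
Lemma lap_err_y_part_dx t : (5 <= m)%nat -> 0 <= t <= T ->
  Rabs ((cdiff2 (fun s => f t (X + h) s) Y h - dXY 0 2 f t (X + h) Y)
        - (cdiff2 (fun s => f t X s) Y h - dXY 0 2 f t X Y)) <= h * (h ^ 2 / 12 * M).
Proof.
  intros Hm Ht.
  set (u := fun s => f t (X + h) s - f t X s).
  assert (Hex : forall x, ex_derive_upto (fun s => f t x s) 5).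
  { intros x. apply (ex_derive_upto_le _ (m - 0)); [lia | apply (regular_ex_dY 3 m f Hf 0); lia]. }
  assert (HDu : forall k z, (k <= 5)%nat ->
            Derive_n u k z = dXY 0 k f t (X + h) z - dXY 0 k f t X z).
  { intros k z Hk. unfold u. rewrite Derive_n_minus_upto with (n := 5%nat) by auto.
    pose proof (Derive_n_dY f k 0 t (X + h) z) as E1.
    pose proof (Derive_n_dY f k 0 t X z) as E0.
    rewrite Nat.add_0_r in E1, E0. rewrite <- E1, <- E0. reflexivity. }
  assert (E : (cdiff2 (fun s => f t (X + h) s) Y h - dXY 0 2 f t (X + h) Y)
              - (cdiff2 (fun s => f t X s) Y h - dXY 0 2 f t X Y) = cdiff2 u Y h - Derive_n u 2 Y).
  { rewrite HDu by lia. unfold u, cdiff2. field. lra. }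
  rewrite E.
  replace (h * (h ^ 2 / 12 * M)) with (h ^ 2 / 12 * (h * M)) by ring.
  apply cdiff2_error; [exact Hh | apply (ex_derive_upto_le _ 5); [lia | now apply ex_derive_upto_minus] |].
  intros z Hz. rewrite HDu by lia.
  apply (increment_abs_le (fun x => dXY 0 4 f t x z) (fun x => dXY 1 4 f t x z)); [exact Hh | |].
  - intros x. apply (is_derive_dX 3 m f Hf 0 4); lia.
  - intros w Hw. apply dXY_abs_le; (lia || lra).
Qed.

Lemma lap_err_x_part_dy t : (5 <= m)%nat -> 0 <= t <= T ->
  Rabs ((cdiff2 (fun s => f t s (Y + h)) X h - dXY 2 0 f t X (Y + h))
        - (cdiff2 (fun s => f t s Y) X h - dXY 2 0 f t X Y)) <= h * (h ^ 2 / 12 * M).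
Proof.
  intros Hm Ht.
  apply (increment_abs_le (fun y => cdiff2 (fun s => f t s y) X h - dXY 2 0 f t X y)
           (fun y => cdiff2 (fun s => dXY 0 1 f t s y) X h - dXY 2 1 f t X y)); [exact Hh | |].
  - intros y. apply is_derive_Rminus.
    + apply (is_derive_cdiff2_param (fun a s => f t a s) (fun a y => dXY 0 1 f t a y)).
      intros a. apply (is_derive_dY 3 m f Hf 0); lia.
    + apply (is_derive_dX2_dY 3 m f Hf); lia.
  - intros z Hz. apply (cdiff2_x_error 0 1); (lia || lra).
Qed.

Lemma lap_err_y_part_dy t : (5 <= m)%nat -> 0 <= t <= T ->
  Rabs ((cdiff2 (fun s => f t X s) (Y + h) h - dXY 0 2 f t X (Y + h))
        - (cdiff2 (fun s => f t X s) Y h - dXY 0 2 f t X Y)) <= h * (h ^ 2 / 12 * M).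
Proof.
  intros Hm Ht.
  apply (increment_abs_le (fun y => cdiff2 (fun s => f t X s) y h - dXY 0 2 f t X y)
           (fun y => cdiff2 (fun s => dXY 0 1 f t X s) y h - dXY 0 3 f t X y)); [exact Hh | |].
  - intros y. apply is_derive_Rminus.
    + apply is_derive_cdiff2_shift. intros z. apply (is_derive_dY 3 m f Hf 0); lia.
    + apply (is_derive_dY 3 m f Hf 2); lia.
  - intros z Hz. apply (cdiff2_y_error 1); (lia || lra).
Qed.

Lemma lap_err_dx t : (5 <= m)%nat -> 0 <= t <= T ->
  Rabs (lap_err f h t (X + h) Y - lap_err f h t X Y) <= h * (h ^ 2 / 6 * M).
Proof.
  intros Hm Ht.
  replace (h * (h ^ 2 / 6 * M)) with (h * (h ^ 2 / 12 * M) + h * (h ^ 2 / 12 * M)) by field.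
  eapply Rle_trans; [|apply Rabs_plus_le; [apply (lap_err_x_part_dx t) | apply (lap_err_y_part_dx t)]];
    auto.
  right. f_equal. unfold lap_err, lap5, lapc. ring.
Qed.

Lemma lap_err_dy t : (5 <= m)%nat -> 0 <= t <= T ->
  Rabs (lap_err f h t X (Y + h) - lap_err f h t X Y) <= h * (h ^ 2 / 6 * M).
Proof.
  intros Hm Ht.
  replace (h * (h ^ 2 / 6 * M)) with (h * (h ^ 2 / 12 * M) + h * (h ^ 2 / 12 * M)) by field.
  eapply Rle_trans; [|apply Rabs_plus_le; [apply (lap_err_x_part_dy t) | apply (lap_err_y_part_dy t)]];
    auto.
  right. f_equal. unfold lap_err, lap5, lapc. ring.
Qed.

End Increments.
End Residuals.

(** * Truncation errors of the scheme *)

Section Model.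
Variables (L amin bmin D eta T mp : R) (p0 : R -> R -> R) (phi p : fun3).
Hypothesis HL : 0 < L.
Hypothesis HD : 0 < D.
Hypothesis Heta : 0 < eta.
Hypothesis HT : 0 < T.
Hypothesis Hmp : 0 < mp.
Hypothesis Hp0 : regular 0 5 (fun _ x y => p0 x y).
Hypothesis Hp0_per : periodic3 L (fun _ x y => p0 x y).
Hypothesis Hp0_ge : forall x y, mp <= p0 x y.
Hypothesis Hphi : regular 3 4 phi.
Hypothesis Hphi_per : periodic3 L phi.
Hypothesis Hp : regular 3 5 p.
Hypothesis Hp_per : periodic3 L p.
Hypothesis Hnonneg : forall t x y, 0 <= t <= T -> 0 <= phi t x y /\ 0 <= p t x y.
Hypothesis Hsol : solves_system D eta T amin bmin L p0 phi p.

(* All derivatives are controlled on [0, 2T] x [amin - L, amin + 3L] x [bmin - L, bmin + 3L],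
   which contains every point touched by the stencils when [tau <= T] and [h <= L]. *)
Variables (Bphi Bp B0 : R).
Hypothesis HMphi : forall i j l t x y, (i <= 3)%nat -> (j + l <= 4)%nat -> 0 <= t <= 2 * T ->
  amin - L <= x <= amin + 3 * L -> bmin - L <= y <= bmin + 3 * L -> Rabs (mixed i j l phi t x y) <= Bphi.
Hypothesis HMp : forall i j l t x y, (i <= 3)%nat -> (j + l <= 5)%nat -> 0 <= t <= 2 * T ->
  amin - L <= x <= amin + 3 * L -> bmin - L <= y <= bmin + 3 * L -> Rabs (mixed i j l p t x y) <= Bp.
Hypothesis HM0 : forall j l t x y, (j + l <= 5)%nat -> 0 <= t <= 2 * T ->
  amin - L <= x <= amin + 3 * L -> bmin - L <= y <= bmin + 3 * L ->
  Rabs (mixed 0 j l (fun _ x y => p0 x y) t x y) <= B0.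

Definition Vc : fun3 := fun t x y => p t x y + p0 x y.
Definition Wc : fun3 := fun t x y => phi t x y / Vc t x y.

Lemma Vc_ge t x y : 0 <= t <= T -> mp <= Vc t x y.
Proof. intros Ht. destruct (Hnonneg t x y Ht). specialize (Hp0_ge x y). unfold Vc. lra. Qed.

Lemma ex_Vc_x t y : ex_derive_upto (fun s => Vc t s y) 5.
Proof.
  apply ex_derive_upto_plus.
  - apply (regular_ex_dX 3 5 p Hp 0 0 t y). lia.
  - apply (regular_ex_dX 0 5 _ Hp0 0 0 t y). lia.
Qed.

Lemma ex_Vc_y t x : ex_derive_upto (fun s => Vc t x s) 5.
Proof.
  apply ex_derive_upto_plus.
  - apply (regular_ex_dY 3 5 p Hp 0 t x). lia.
  - apply (regular_ex_dY 0 5 _ Hp0 0 t x). lia.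
Qed.

Lemma derivs_Vc_x t y z : 0 <= t <= 2 * T -> amin - L <= z <= amin + 3 * L ->
  bmin - L <= y <= bmin + 3 * L -> derivs_le (fun s => Vc t s y) 4 z (Bp + B0).
Proof.
  intros Ht Hz Hy. apply derivs_le_plus.
  - apply (ex_derive_upto_le _ 5); [lia | apply (regular_ex_dX 3 5 p Hp 0 0 t y); lia].
  - apply (ex_derive_upto_le _ 5); [lia | apply (regular_ex_dX 0 5 _ Hp0 0 0 t y); lia].
  - intros k Hk. rewrite (Derive_n_dX p k 0 0). apply (HMp 0); auto; lia.
  - intros k Hk. rewrite (Derive_n_dX (fun _ x y => p0 x y) k 0 0 t). apply HM0; auto; lia.
Qed.

Lemma derivs_Vc_y t x z : 0 <= t <= 2 * T -> amin - L <= x <= amin + 3 * L ->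
  bmin - L <= z <= bmin + 3 * L -> derivs_le (fun s => Vc t x s) 4 z (Bp + B0).
Proof.
  intros Ht Hx Hz. apply derivs_le_plus.
  - apply (ex_derive_upto_le _ 5); [lia | apply (regular_ex_dY 3 5 p Hp 0 t x); lia].
  - apply (ex_derive_upto_le _ 5); [lia | apply (regular_ex_dY 0 5 _ Hp0 0 t x); lia].
  - intros k Hk. rewrite (Derive_n_dY p k 0). apply (HMp 0); auto; lia.
  - intros k Hk. rewrite (Derive_n_dY (fun _ x y => p0 x y) k 0 t). apply HM0; auto; lia.
Qed.

Definition Kw : R := 2 ^ 3 * Bphi * inv_derivs_bound 3 mp (Bp + B0).

Lemma ex_Wc_x t y : 0 <= t <= T -> ex_derive_upto (fun s => Wc t s y) 3.
Proof.
  intros Ht. apply ex_derive_upto_mult.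
  - apply (ex_derive_upto_le _ 4); [lia | apply (regular_ex_dX 3 4 phi Hphi 0 0 t y); lia].
  - apply (ex_derive_upto_Rinv (fun s => Vc t s y) mp Hmp (fun s => Vc_ge t s y Ht)).
    apply (ex_derive_upto_le _ 5); [lia | apply ex_Vc_x].
Qed.

Lemma ex_Wc_y t x : 0 <= t <= T -> ex_derive_upto (fun s => Wc t x s) 3.
Proof.
  intros Ht. apply ex_derive_upto_mult.
  - apply (ex_derive_upto_le _ 4); [lia | apply (regular_ex_dY 3 4 phi Hphi 0 t x); lia].
  - apply (ex_derive_upto_Rinv (fun s => Vc t x s) mp Hmp (fun s => Vc_ge t x s Ht)).
    apply (ex_derive_upto_le _ 5); [lia | apply ex_Vc_y].
Qed.

Lemma derivs_Wc_x t y z : 0 <= t <= T -> amin - L <= z <= amin + 3 * L ->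
  bmin - L <= y <= bmin + 3 * L -> derivs_le (fun s => Wc t s y) 3 z Kw.
Proof.
  intros Ht Hz Hy. apply derivs_le_mult.
  - apply (ex_derive_upto_le _ 4); [lia | apply (regular_ex_dX 3 4 phi Hphi 0 0 t y); lia].
  - apply (ex_derive_upto_Rinv (fun s => Vc t s y) mp Hmp (fun s => Vc_ge t s y Ht)).
    apply (ex_derive_upto_le _ 5); [lia | apply ex_Vc_x].
  - intros k Hk. rewrite (Derive_n_dX phi k 0 0). apply (HMphi 0); auto; lra || lia.
  - apply derivs_le_Rinv; [exact Hmp | exact (fun s => Vc_ge t s y Ht)
      | apply (ex_derive_upto_le _ 5); [lia | apply ex_Vc_x] |].
    apply derivs_le_le with 4%nat; [lia | apply derivs_Vc_x; auto; lra].
Qed.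

Lemma derivs_Wc_y t x z : 0 <= t <= T -> amin - L <= x <= amin + 3 * L ->
  bmin - L <= z <= bmin + 3 * L -> derivs_le (fun s => Wc t x s) 3 z Kw.
Proof.
  intros Ht Hx Hz. apply derivs_le_mult.
  - apply (ex_derive_upto_le _ 4); [lia | apply (regular_ex_dY 3 4 phi Hphi 0 t x); lia].
  - apply (ex_derive_upto_Rinv (fun s => Vc t x s) mp Hmp (fun s => Vc_ge t x s Ht)).
    apply (ex_derive_upto_le _ 5); [lia | apply ex_Vc_y].
  - intros k Hk. rewrite (Derive_n_dY phi k 0). apply (HMphi 0); auto; lra || lia.
  - apply derivs_le_Rinv; [exact Hmp | exact (fun s => Vc_ge t x s Ht)
      | apply (ex_derive_upto_le _ 5); [lia | apply ex_Vc_y] |].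
    apply derivs_le_le with 4%nat; [lia | apply derivs_Vc_y; auto; lra].
Qed.

Definition divWgradV (t x y : R) : R :=
  Derive (fun s => Wc t s y * Derive (fun s' => Vc t s' y) s) x
  + Derive (fun s => Wc t x s * Derive (fun s' => Vc t x s') s) y.

Definition drift_err (h t x y : R) : R := div_flux (Wc t) (Vc t) x y h - divWgradV t x y.

Definition Kdrift : R := 2 * (Kw * (Bp + B0) * (1 + L + L ^ 2)).

Lemma drift_err_abs_le h t X Y : 0 < h -> h <= L -> 0 <= t <= T ->
  amin <= X <= amin + L -> bmin <= Y <= bmin + L -> Rabs (drift_err h t X Y) <= h ^ 2 * Kdrift.
Proof.
  intros Hh HhL Ht HX HY. unfold drift_err, div_flux, divWgradV, Kdrift.
  replace (h ^ 2 * (2 * (Kw * (Bp + B0) * (1 + L + L ^ 2))))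
    with (h ^ 2 * (Kw * (Bp + B0) * (1 + L + L ^ 2)) + h ^ 2 * (Kw * (Bp + B0) * (1 + L + L ^ 2)))
    by ring.
  replace (_ + _ - _) with
    ((flux_diff (fun s => Wc t s Y) (fun s => Vc t s Y) X h
      - Derive (fun s => Wc t s Y * Derive (fun s' => Vc t s' Y) s) X)
     + (flux_diff (fun s => Wc t X s) (fun s => Vc t X s) Y h
      - Derive (fun s => Wc t X s * Derive (fun s' => Vc t X s') s) Y)) by ring.
  apply Rabs_plus_le; apply flux_diff_error; auto.
  - exact (ex_Wc_x t Y Ht).
  - apply (ex_derive_upto_le _ 5); [lia | apply ex_Vc_x].
  - intros z k Hz Hk. apply derivs_Wc_x; auto; lra.
  - intros z k Hz Hk. apply derivs_Vc_x; auto; lra.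
  - exact (ex_Wc_y t X Ht).
  - apply (ex_derive_upto_le _ 5); [lia | apply ex_Vc_y].
  - intros z k Hz Hk. apply derivs_Wc_y; auto; lra.
  - intros z k Hz Hk. apply derivs_Vc_y; auto; lra.
Qed.

Lemma dX_drift t x y : 0 <= t <= T ->
  Derive (fun s => dX phi t s y - 2 * phi t s y / Vc t s y * dX Vc t s y) x
  = dXY 2 0 phi t x y - 2 * Derive (fun s => Wc t s y * Derive (fun s' => Vc t s' y) s) x.
Proof.
  intros Ht.
  rewrite (Derive_ext _ (fun s => dX phi t s y - 2 * (Wc t s y * Derive (fun s' => Vc t s' y) s)))
    by (intros s; unfold Wc, dX, dY, Rdiv; ring).
  rewrite Derive_minus, Derive_scal; [reflexivity | |].
  - apply (regular_ex_derive_dX 3 4 phi Hphi 1 0); lia.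
  - apply ex_derive_scal, ex_derive_mult.
    + apply (ex_Wc_x t y Ht 1%nat). lia.
    + apply (ex_Vc_x t y 2%nat). lia.
Qed.

Lemma dY_drift t x y : 0 <= t <= T ->
  Derive (fun s => dY phi t x s - 2 * phi t x s / Vc t x s * dY Vc t x s) y
  = dXY 0 2 phi t x y - 2 * Derive (fun s => Wc t x s * Derive (fun s' => Vc t x s') s) y.
Proof.
  intros Ht.
  rewrite (Derive_ext _ (fun s => dY phi t x s - 2 * (Wc t x s * Derive (fun s' => Vc t x s') s)))
    by (intros s; unfold Wc, dX, dY, Rdiv; ring).
  rewrite Derive_minus, Derive_scal; [reflexivity | |].
  - apply (regular_ex_derive_dY 3 4 phi Hphi 1); lia.
  - apply ex_derive_scal, ex_derive_mult.
    + apply (ex_Wc_y t x Ht 1%nat). lia.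
    + apply (ex_Vc_y t x 2%nat). lia.
Qed.

Lemma pde_phi t X Y : 0 <= t <= T -> amin <= X <= amin + L -> bmin <= Y <= bmin + L ->
  dT phi t X Y = D / 4 * (lapc phi t X Y - 2 * divWgradV t X Y) - Vc t X Y * phi t X Y.
Proof.
  intros Ht HX HY. destruct (Hsol t X Y Ht HX HY) as [E _]. rewrite E.
  unfold dX at 1, dY at 1. rewrite dX_drift, dY_drift by exact Ht.
  unfold lapc, divWgradV, Vc. ring.
Qed.

(* The equation for [p] only involves [L]-periodic functions, so it extends from the
   period cell to the neighbouring cells reached by the forward differences. *)
Lemma pde_p t X Y : 0 <= t <= T -> amin <= X <= amin + 2 * L -> bmin <= Y <= bmin + 2 * L ->
  dT p t X Y = eta * D * lapc p t X Y + Vc t X Y * phi t X Y - p t X Y.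
Proof.
  intros Ht HX HY.
  set (G := fun t x y => dT p t x y - (eta * D * lapc p t x y + Vc t x y * phi t x y - p t x y)).
  enough (G t X Y = 0) by (unfold G in *; lra).
  apply (periodic3_zero_extend G L amin bmin t HL); auto.
  - intros t' x y. unfold G, lapc, dXY, Vc. simpl. split.
    + rewrite (proj1 (periodic3_dT L p Hp_per t' x y)),
        (proj1 (periodic3_dX L _ (periodic3_dX L p Hp_per) t' x y)),
        (proj1 (periodic3_dY L _ (periodic3_dY L p Hp_per) t' x y)),
        (proj1 (Hp_per t' x y)), (proj1 (Hphi_per t' x y)), (proj1 (Hp0_per t' x y)).
      reflexivity.
    + rewrite (proj2 (periodic3_dT L p Hp_per t' x y)),
        (proj2 (periodic3_dX L _ (periodic3_dX L p Hp_per) t' x y)),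
        (proj2 (periodic3_dY L _ (periodic3_dY L p Hp_per) t' x y)),
        (proj2 (Hp_per t' x y)), (proj2 (Hphi_per t' x y)), (proj2 (Hp0_per t' x y)).
      reflexivity.
  - intros x y Hx Hy. destruct (Hsol t x y Ht Hx Hy) as [_ E].
    unfold G. rewrite E. unfold lapc, dXY, Vc. simpl. ring.
Qed.

Definition Rphik_residuals (h tau t X Y : R) : R :=
  ab2_res phi tau t X Y - D / 8 * (lap_err phi h (t + tau) X Y + lap_err phi h t X Y)
  - D / 8 * tdiff2 (lapc phi) tau t X Y + 3 * D / 4 * drift_err h t X Y - D / 4 * drift_err h (t - tau) X Y.

Definition Rpk_residuals (h tau t X Y : R) : R :=
  ab2_res p tau t X Y - eta * D / 2 * (lap_err p h (t + tau) X Y + lap_err p h t X Y)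
  - eta * D / 2 * tdiff2 (lapc p) tau t X Y.

Definition Rphi0_residuals (h tau X Y : R) : R :=
  euler_res phi tau X Y - D / 4 * lap_err phi h tau X Y - D / 4 * tincr (lapc phi) tau X Y
  + D / 2 * drift_err h 0 X Y.

Definition Rp0_residuals (h tau X Y : R) : R :=
  euler_res p tau X Y - eta * D * lap_err p h tau X Y - eta * D * tincr (lapc p) tau X Y.

Lemma Rphik_eq_residuals h tau k i j : h <> 0 -> 0 < tau ->
  0 <= tk tau (S k) - tau -> tk tau (S k) <= T ->
  amin <= amin + IZR i * h <= amin + L -> bmin <= bmin + IZR j * h <= bmin + L ->
  Rphik D amin bmin h tau p0 phi p (S k) i j
  = Rphik_residuals h tau (tk tau (S k)) (amin + IZR i * h) (bmin + IZR j * h).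
Proof.
  intros Hh Htau Ht0 Ht1 HX HY.
  set (t := tk tau (S k)) in *. set (X := amin + IZR i * h) in *. set (Y := bmin + IZR j * h) in *.
  assert (Ed : forall s, divwgrad h (Wh amin bmin h p0 phi p s) (Vh amin bmin h p0 p s) i j
                         = div_flux (Wc s) (Vc s) X Y h)
    by (intros s; exact (divwgrad_restr amin bmin h (Wc s) (Vc s) i j)).
  unfold Rphik. rewrite tk_S_add1, tk_S_sub1, lap_plus, !Ed. fold t.
  unfold Phh. rewrite !lap_restr by exact Hh. fold X Y.
  unfold Rphik_residuals, ab2_res, tdiff2, drift_err.
  rewrite (pde_phi t X Y), (pde_phi (t - tau) X Y) by lra.
  unfold lap_err, lapc, lap5, cdiff2, Vh, Ph, P0h, restr, Vc. cbv beta. fold X Y. field. lra.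
Qed.

Lemma Rpk_eq_residuals h tau k i j : h <> 0 -> 0 < tau ->
  0 <= tk tau (S k) - tau -> tk tau (S k) <= T ->
  amin <= amin + IZR i * h <= amin + 2 * L -> bmin <= bmin + IZR j * h <= bmin + 2 * L ->
  Rpk D eta amin bmin h tau p0 phi p (S k) i j
  = Rpk_residuals h tau (tk tau (S k)) (amin + IZR i * h) (bmin + IZR j * h).
Proof.
  intros Hh Htau Ht0 Ht1 HX HY.
  set (t := tk tau (S k)) in *. set (X := amin + IZR i * h) in *. set (Y := bmin + IZR j * h) in *.
  unfold Rpk. rewrite tk_S_add1, tk_S_sub1, lap_plus. fold t.
  unfold Ph. rewrite !lap_restr by exact Hh. fold X Y.
  unfold Rpk_residuals, ab2_res, tdiff2.
  rewrite (pde_p t X Y), (pde_p (t - tau) X Y) by lra.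
  unfold lap_err, lapc, lap5, cdiff2, Vh, Ph, P0h, Phh, restr, Vc. cbv beta. fold X Y. field. lra.
Qed.

Lemma Rphi0_eq_residuals h tau i j : h <> 0 -> 0 < tau -> tau <= T ->
  amin <= amin + IZR i * h <= amin + L -> bmin <= bmin + IZR j * h <= bmin + L ->
  Rphi0 D amin bmin h tau p0 phi p i j = Rphi0_residuals h tau (amin + IZR i * h) (bmin + IZR j * h).
Proof.
  intros Hh Htau HtT HX HY.
  set (X := amin + IZR i * h) in *. set (Y := bmin + IZR j * h) in *.
  assert (Ed : divwgrad h (Wh amin bmin h p0 phi p 0) (Vh amin bmin h p0 p 0) i j
               = div_flux (Wc 0) (Vc 0) X Y h)
    by exact (divwgrad_restr amin bmin h (Wc 0) (Vc 0) i j).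
  unfold Rphi0. rewrite Ed. unfold Phh. rewrite lap_restr by exact Hh. fold X Y.
  unfold Rphi0_residuals, euler_res, tincr, drift_err.
  rewrite (pde_phi 0 X Y) by lra.
  unfold lap_err, lapc, lap5, cdiff2, Vh, Ph, P0h, restr, Vc. cbv beta. fold X Y. field. lra.
Qed.

Lemma Rp0_eq_residuals h tau i j : h <> 0 -> 0 < tau -> tau <= T ->
  amin <= amin + IZR i * h <= amin + 2 * L -> bmin <= bmin + IZR j * h <= bmin + 2 * L ->
  Rp0 D eta amin bmin h tau p0 phi p i j = Rp0_residuals h tau (amin + IZR i * h) (bmin + IZR j * h).
Proof.
  intros Hh Htau HtT HX HY.
  set (X := amin + IZR i * h) in *. set (Y := bmin + IZR j * h) in *.
  unfold Rp0. unfold Ph. rewrite lap_restr by exact Hh. fold X Y.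
  unfold Rp0_residuals, euler_res, tincr.
  rewrite (pde_p 0 X Y) by lra.
  unfold lap_err, lapc, lap5, cdiff2, Vh, Ph, P0h, Phh, restr, Vc. cbv beta. fold X Y. field. lra.
Qed.

Lemma Bphi_nonneg : 0 <= Bphi.
Proof.
  exact (Rabs_le_nonneg _ Bphi
           (HMphi 0 0 0 0 amin bmin ltac:(lia) ltac:(lia) ltac:(lra) ltac:(lra) ltac:(lra))).
Qed.

Lemma Bp_nonneg : 0 <= Bp.
Proof.
  exact (Rabs_le_nonneg _ Bp
           (HMp 0 0 0 0 amin bmin ltac:(lia) ltac:(lia) ltac:(lra) ltac:(lra) ltac:(lra))).
Qed.

Lemma Kdrift_nonneg : 0 <= Kdrift.
Proof.
  assert (0 <= Kw) by exact (derivs_le_nonneg _ _ _ _ (derivs_Wc_x 0 bmin amin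
                               ltac:(lra) ltac:(lra) ltac:(lra))).
  assert (0 <= Bp + B0) by exact (derivs_le_nonneg _ _ _ _ (derivs_Vc_x 0 bmin amin
                               ltac:(lra) ltac:(lra) ltac:(lra))).
  assert (0 <= 1 + L + L ^ 2) by (pose proof (pow2_ge_0 L); lra).
  unfold Kdrift. apply Rmult_le_pos; [lra|]. apply Rmult_le_pos; [apply Rmult_le_pos|]; assumption.
Qed.

Definition Ktrunc : R := (1 + D + eta * D) * (2 * Bphi + 2 * Bp + Kdrift).

Lemma coef_le_Ktrunc c0 c1 c2 a :
  0 <= c0 <= 2 * Bphi + 2 * Bp + Kdrift -> 0 <= c1 <= 2 * Bphi + 2 * Bp + Kdrift ->
  0 <= c2 <= 2 * Bphi + 2 * Bp + Kdrift -> a = c0 + D * c1 + eta * D * c2 -> a <= Ktrunc.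
Proof.
  intros H0 H1 H2 ->. assert (0 <= eta * D) by nra. unfold Ktrunc.
  assert (D * c1 <= D * (2 * Bphi + 2 * Bp + Kdrift)) by (apply Rmult_le_compat_l; lra).
  assert (eta * D * c2 <= eta * D * (2 * Bphi + 2 * Bp + Kdrift)) by (apply Rmult_le_compat_l; lra).
  nra.
Qed.

Lemma Rphik_residuals_abs_le h tau t X Y : 0 < h -> h <= L -> 0 < tau -> tau <= T ->
  0 <= t - tau -> t <= T -> amin <= X <= amin + L -> bmin <= Y <= bmin + L ->
  Rabs (Rphik_residuals h tau t X Y) <= Ktrunc * (tau ^ 2 + h ^ 2).
Proof.
  intros Hh HhL Htau HtT Ht0 Ht1 HX HY.
  assert (A := ab2_res_abs_le phi 4 _ _ _ _ _ _ Hphi HMphi 0 0 t tau X Y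
                 ltac:(lia) Htau Ht0 ltac:(lra) ltac:(lra) ltac:(lra)).
  cbn [dXY iter_op] in A.
  assert (HD0 : 0 <= D) by lra.
  pose proof (Rabs_le_scal _ _ _ HD0 (lap_err_abs_le phi 4 _ _ _ _ _ _ Hphi HMphi (t + tau) X Y h
                ltac:(lia) Hh ltac:(lra) ltac:(lra) ltac:(lra) ltac:(lra) ltac:(lra))).
  pose proof (Rabs_le_scal _ _ _ HD0 (lap_err_abs_le phi 4 _ _ _ _ _ _ Hphi HMphi t X Y h
                ltac:(lia) Hh ltac:(lra) ltac:(lra) ltac:(lra) ltac:(lra) ltac:(lra))).
  pose proof (Rabs_le_scal _ _ _ HD0 (lapc_tdiff2_abs_le phi 4 _ _ _ _ _ _ Hphi HMphi t tau X Y
                ltac:(lia) Htau Ht0 ltac:(lra) ltac:(lra) ltac:(lra))).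
  pose proof (Rabs_le_scal _ _ _ HD0 (drift_err_abs_le h t X Y Hh HhL ltac:(lra) HX HY)).
  pose proof (Rabs_le_scal _ _ _ HD0 (drift_err_abs_le h (t - tau) X Y Hh HhL ltac:(lra) HX HY)).
  apply Rle_trans with (tau ^ 2 * (Bphi + D * (Bphi / 4)) + h ^ 2 * (D * (Bphi / 24 + Kdrift))).
  - apply Rabs_le_between in A. apply Rabs_le_between. unfold Rphik_residuals. split; lra.
  - pose proof Bphi_nonneg. pose proof Bp_nonneg. pose proof Kdrift_nonneg.
    apply lin_comb_le; [apply pow2_ge_0 | apply pow2_ge_0 | |].
    + apply (coef_le_Ktrunc Bphi (Bphi / 4) 0); lra || ring.
    + apply (coef_le_Ktrunc 0 (Bphi / 24 + Kdrift) 0); lra || ring.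
Qed.

Lemma Rpk_residuals_abs_le h tau t X Y : 0 < h -> h <= L -> 0 < tau -> tau <= T ->
  0 <= t - tau -> t <= T -> amin <= X <= amin + 2 * L -> bmin <= Y <= bmin + 2 * L ->
  Rabs (Rpk_residuals h tau t X Y) <= Ktrunc * (tau ^ 2 + h ^ 2).
Proof.
  intros Hh HhL Htau HtT Ht0 Ht1 HX HY.
  assert (A := ab2_res_abs_le p 5 _ _ _ _ _ _ Hp HMp 0 0 t tau X Y
                 ltac:(lia) Htau Ht0 ltac:(lra) ltac:(lra) ltac:(lra)).
  cbn [dXY iter_op] in A.
  assert (HED : 0 <= eta * D / 2) by nra.
  pose proof (Rabs_le_scal _ _ _ HED (lap_err_abs_le p 5 _ _ _ _ _ _ Hp HMp (t + tau) X Y h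
                ltac:(lia) Hh ltac:(lra) ltac:(lra) ltac:(lra) ltac:(lra) ltac:(lra))).
  pose proof (Rabs_le_scal _ _ _ HED (lap_err_abs_le p 5 _ _ _ _ _ _ Hp HMp t X Y h
                ltac:(lia) Hh ltac:(lra) ltac:(lra) ltac:(lra) ltac:(lra) ltac:(lra))).
  pose proof (Rabs_le_scal _ _ _ HED (lapc_tdiff2_abs_le p 5 _ _ _ _ _ _ Hp HMp t tau X Y
                ltac:(lia) Htau Ht0 ltac:(lra) ltac:(lra) ltac:(lra))).
  apply Rle_trans with (tau ^ 2 * (Bp + eta * D * Bp) + h ^ 2 * (eta * D * (Bp / 6))).
  - apply Rabs_le_between in A. apply Rabs_le_between. unfold Rpk_residuals. split; lra.
  - pose proof Bphi_nonneg. pose proof Bp_nonneg. pose proof Kdrift_nonneg.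
    apply lin_comb_le; [apply pow2_ge_0 | apply pow2_ge_0 | |].
    + apply (coef_le_Ktrunc Bp 0 Bp); lra || ring.
    + apply (coef_le_Ktrunc 0 0 (Bp / 6)); lra || ring.
Qed.

Lemma Rpk_residuals_dx h tau t X Y : 0 < h -> h <= L -> 0 < tau -> tau <= T ->
  0 <= t - tau -> t <= T -> amin <= X <= amin + L -> bmin <= Y <= bmin + L ->
  Rabs (Rpk_residuals h tau t (X + h) Y - Rpk_residuals h tau t X Y)
  <= h * (Ktrunc * (tau ^ 2 + h ^ 2)).
Proof.
  intros Hh HhL Htau HtT Ht0 Ht1 HX HY.
  assert (HXh : amin - L <= X - h /\ X + 2 * h <= amin + 3 * L) by lra.
  assert (HYh : bmin - L <= Y - h /\ Y + 2 * h <= bmin + 3 * L) by lra.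
  assert (A := ab2_res_dx p 5 _ _ _ _ _ _ Hp HMp X Y h Hh HXh HYh t tau
                 ltac:(lia) Htau Ht0 ltac:(lra)).
  assert (HED : 0 <= eta * D / 2) by nra.
  pose proof (Rabs_le_scal _ _ _ HED (lap_err_dx p 5 _ _ _ _ _ _ Hp HMp X Y h Hh HXh HYh (t + tau)
                ltac:(lia) ltac:(lra))).
  pose proof (Rabs_le_scal _ _ _ HED (lap_err_dx p 5 _ _ _ _ _ _ Hp HMp X Y h Hh HXh HYh t
                ltac:(lia) ltac:(lra))).
  pose proof (Rabs_le_scal _ _ _ HED (lapc_tdiff2_dx p 5 _ _ _ _ _ _ Hp HMp X Y h Hh HXh HYh t tau
                ltac:(lia) Htau Ht0 ltac:(lra))).
  apply Rle_trans with (h * (tau ^ 2 * (Bp + eta * D * Bp) + h ^ 2 * (eta * D * (Bp / 6)))).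
  - apply Rabs_le_between in A. apply Rabs_le_between. unfold Rpk_residuals. split; nra.
  - pose proof Bphi_nonneg. pose proof Bp_nonneg. pose proof Kdrift_nonneg.
    apply Rmult_le_compat_l; [lra|].
    apply lin_comb_le; [apply pow2_ge_0 | apply pow2_ge_0 | |].
    + apply (coef_le_Ktrunc Bp 0 Bp); lra || ring.
    + apply (coef_le_Ktrunc 0 0 (Bp / 6)); lra || ring.
Qed.

Lemma Rpk_residuals_dy h tau t X Y : 0 < h -> h <= L -> 0 < tau -> tau <= T ->
  0 <= t - tau -> t <= T -> amin <= X <= amin + L -> bmin <= Y <= bmin + L ->
  Rabs (Rpk_residuals h tau t X (Y + h) - Rpk_residuals h tau t X Y)
  <= h * (Ktrunc * (tau ^ 2 + h ^ 2)).
Proof.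
  intros Hh HhL Htau HtT Ht0 Ht1 HX HY.
  assert (HXh : amin - L <= X - h /\ X + 2 * h <= amin + 3 * L) by lra.
  assert (HYh : bmin - L <= Y - h /\ Y + 2 * h <= bmin + 3 * L) by lra.
  assert (A := ab2_res_dy p 5 _ _ _ _ _ _ Hp HMp X Y h Hh HXh HYh t tau
                 ltac:(lia) Htau Ht0 ltac:(lra)).
  assert (HED : 0 <= eta * D / 2) by nra.
  pose proof (Rabs_le_scal _ _ _ HED (lap_err_dy p 5 _ _ _ _ _ _ Hp HMp X Y h Hh HXh HYh (t + tau)
                ltac:(lia) ltac:(lra))).
  pose proof (Rabs_le_scal _ _ _ HED (lap_err_dy p 5 _ _ _ _ _ _ Hp HMp X Y h Hh HXh HYh t
                ltac:(lia) ltac:(lra))).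
  pose proof (Rabs_le_scal _ _ _ HED (lapc_tdiff2_dy p 5 _ _ _ _ _ _ Hp HMp X Y h Hh HXh HYh t tau
                ltac:(lia) Htau Ht0 ltac:(lra))).
  apply Rle_trans with (h * (tau ^ 2 * (Bp + eta * D * Bp) + h ^ 2 * (eta * D * (Bp / 6)))).
  - apply Rabs_le_between in A. apply Rabs_le_between. unfold Rpk_residuals. split; nra.
  - pose proof Bphi_nonneg. pose proof Bp_nonneg. pose proof Kdrift_nonneg.
    apply Rmult_le_compat_l; [lra|].
    apply lin_comb_le; [apply pow2_ge_0 | apply pow2_ge_0 | |].
    + apply (coef_le_Ktrunc Bp 0 Bp); lra || ring.
    + apply (coef_le_Ktrunc 0 0 (Bp / 6)); lra || ring.
Qed.

Lemma Rphi0_residuals_abs_le h tau X Y : 0 < h -> h <= L -> 0 < tau -> tau <= T ->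
  amin <= X <= amin + L -> bmin <= Y <= bmin + L ->
  Rabs (Rphi0_residuals h tau X Y) <= Ktrunc * (tau + h ^ 2).
Proof.
  intros Hh HhL Htau HtT HX HY.
  assert (A := euler_res_abs_le phi 4 _ _ _ _ _ _ Hphi HMphi 0 0 tau X Y
                 ltac:(lia) Htau ltac:(lra) ltac:(lra) ltac:(lra)).
  cbn [dXY iter_op] in A.
  assert (HD0 : 0 <= D) by lra.
  pose proof (Rabs_le_scal _ _ _ HD0 (lap_err_abs_le phi 4 _ _ _ _ _ _ Hphi HMphi tau X Y h
                ltac:(lia) Hh ltac:(lra) ltac:(lra) ltac:(lra) ltac:(lra) ltac:(lra))).
  pose proof (Rabs_le_scal _ _ _ HD0 (lapc_tincr_abs_le phi 4 _ _ _ _ _ _ Hphi HMphi tau X Y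
                ltac:(lia) Htau ltac:(lra) ltac:(lra) ltac:(lra))).
  pose proof (Rabs_le_scal _ _ _ HD0 (drift_err_abs_le h 0 X Y Hh HhL ltac:(lra) HX HY)).
  apply Rle_trans with (tau * (Bphi / 2 + D * (Bphi / 2)) + h ^ 2 * (D * (Bphi / 24 + Kdrift / 2))).
  - apply Rabs_le_between in A. apply Rabs_le_between. unfold Rphi0_residuals. split; lra.
  - pose proof Bphi_nonneg. pose proof Bp_nonneg. pose proof Kdrift_nonneg.
    apply lin_comb_le; [lra | apply pow2_ge_0 | |].
    + apply (coef_le_Ktrunc (Bphi / 2) (Bphi / 2) 0); lra || ring.
    + apply (coef_le_Ktrunc 0 (Bphi / 24 + Kdrift / 2) 0); lra || ring.
Qed.

Lemma Rp0_residuals_abs_le h tau X Y : 0 < h -> h <= L -> 0 < tau -> tau <= T ->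
  amin <= X <= amin + 2 * L -> bmin <= Y <= bmin + 2 * L ->
  Rabs (Rp0_residuals h tau X Y) <= Ktrunc * (tau + h ^ 2).
Proof.
  intros Hh HhL Htau HtT HX HY.
  assert (A := euler_res_abs_le p 5 _ _ _ _ _ _ Hp HMp 0 0 tau X Y
                 ltac:(lia) Htau ltac:(lra) ltac:(lra) ltac:(lra)).
  cbn [dXY iter_op] in A.
  assert (HED : 0 <= eta * D) by nra.
  pose proof (Rabs_le_scal _ _ _ HED (lap_err_abs_le p 5 _ _ _ _ _ _ Hp HMp tau X Y h
                ltac:(lia) Hh ltac:(lra) ltac:(lra) ltac:(lra) ltac:(lra) ltac:(lra))).
  pose proof (Rabs_le_scal _ _ _ HED (lapc_tincr_abs_le p 5 _ _ _ _ _ _ Hp HMp tau X Y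
                ltac:(lia) Htau ltac:(lra) ltac:(lra) ltac:(lra))).
  apply Rle_trans with (tau * (Bp / 2 + eta * D * (2 * Bp)) + h ^ 2 * (eta * D * (Bp / 6))).
  - apply Rabs_le_between in A. apply Rabs_le_between. unfold Rp0_residuals. split; lra.
  - pose proof Bphi_nonneg. pose proof Bp_nonneg. pose proof Kdrift_nonneg.
    apply lin_comb_le; [lra | apply pow2_ge_0 | |].
    + apply (coef_le_Ktrunc (Bp / 2) 0 (2 * Bp)); lra || ring.
    + apply (coef_le_Ktrunc 0 0 (Bp / 6)); lra || ring.
Qed.

Lemma Rp0_residuals_dx h tau X Y : 0 < h -> h <= L -> 0 < tau -> tau <= T ->
  amin <= X <= amin + L -> bmin <= Y <= bmin + L ->
  Rabs (Rp0_residuals h tau (X + h) Y - Rp0_residuals h tau X Y) <= h * (Ktrunc * (tau + h ^ 2)).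
Proof.
  intros Hh HhL Htau HtT HX HY.
  assert (HXh : amin - L <= X - h /\ X + 2 * h <= amin + 3 * L) by lra.
  assert (HYh : bmin - L <= Y - h /\ Y + 2 * h <= bmin + 3 * L) by lra.
  assert (A := euler_res_dx p 5 _ _ _ _ _ _ Hp HMp X Y h Hh HXh HYh tau ltac:(lia) Htau ltac:(lra)).
  assert (HED : 0 <= eta * D) by nra.
  pose proof (Rabs_le_scal _ _ _ HED (lap_err_dx p 5 _ _ _ _ _ _ Hp HMp X Y h Hh HXh HYh tau
                ltac:(lia) ltac:(lra))).
  pose proof (Rabs_le_scal _ _ _ HED (lapc_tincr_dx p 5 _ _ _ _ _ _ Hp HMp X Y h Hh HXh HYh tau
                ltac:(lia) Htau ltac:(lra))).
  apply Rle_trans with (h * (tau * (Bp / 2 + eta * D * (2 * Bp)) + h ^ 2 * (eta * D * (Bp / 6)))).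
  - apply Rabs_le_between in A. apply Rabs_le_between. unfold Rp0_residuals. split; nra.
  - pose proof Bphi_nonneg. pose proof Bp_nonneg. pose proof Kdrift_nonneg.
    apply Rmult_le_compat_l; [lra|].
    apply lin_comb_le; [lra | apply pow2_ge_0 | |].
    + apply (coef_le_Ktrunc (Bp / 2) 0 (2 * Bp)); lra || ring.
    + apply (coef_le_Ktrunc 0 0 (Bp / 6)); lra || ring.
Qed.

Lemma Rp0_residuals_dy h tau X Y : 0 < h -> h <= L -> 0 < tau -> tau <= T ->
  amin <= X <= amin + L -> bmin <= Y <= bmin + L ->
  Rabs (Rp0_residuals h tau X (Y + h) - Rp0_residuals h tau X Y) <= h * (Ktrunc * (tau + h ^ 2)).
Proof.
  intros Hh HhL Htau HtT HX HY.
  assert (HXh : amin - L <= X - h /\ X + 2 * h <= amin + 3 * L) by lra.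
  assert (HYh : bmin - L <= Y - h /\ Y + 2 * h <= bmin + 3 * L) by lra.
  assert (A := euler_res_dy p 5 _ _ _ _ _ _ Hp HMp X Y h Hh HXh HYh tau ltac:(lia) Htau ltac:(lra)).
  assert (HED : 0 <= eta * D) by nra.
  pose proof (Rabs_le_scal _ _ _ HED (lap_err_dy p 5 _ _ _ _ _ _ Hp HMp X Y h Hh HXh HYh tau
                ltac:(lia) ltac:(lra))).
  pose proof (Rabs_le_scal _ _ _ HED (lapc_tincr_dy p 5 _ _ _ _ _ _ Hp HMp X Y h Hh HXh HYh tau
                ltac:(lia) Htau ltac:(lra))).
  apply Rle_trans with (h * (tau * (Bp / 2 + eta * D * (2 * Bp)) + h ^ 2 * (eta * D * (Bp / 6)))).
  - apply Rabs_le_between in A. apply Rabs_le_between. unfold Rp0_residuals. split; nra.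
  - pose proof Bphi_nonneg. pose proof Bp_nonneg. pose proof Kdrift_nonneg.
    apply Rmult_le_compat_l; [lra|].
    apply lin_comb_le; [lra | apply pow2_ge_0 | |].
    + apply (coef_le_Ktrunc (Bp / 2) 0 (2 * Bp)); lra || ring.
    + apply (coef_le_Ktrunc 0 0 (Bp / 6)); lra || ring.
Qed.

Lemma Ktrunc_nonneg : 0 <= Ktrunc.
Proof.
  pose proof Bphi_nonneg. pose proof Bp_nonneg. pose proof Kdrift_nonneg.
  unfold Ktrunc. apply Rmult_le_pos; nra.
Qed.

Lemma mesh_size N : (1 <= N)%nat -> 0 < L / INR N /\ L / INR N <= L /\ INR N * (L / INR N) = L.
Proof.
  intros HN. assert (1 <= INR N) by (apply (le_INR 1 N); lia).
  assert (E : INR N * (L / INR N) = L) by (field; lra).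
  repeat split; [apply Rdiv_lt_0_compat; lra | | exact E]. nra.
Qed.

Lemma truncation_errors_step_bound N tau k : (1 <= N)%nat -> 0 < tau -> INR k <= T / tau - 1 ->
  let h := L / INR N in
  normL2 N h (Rphik D amin bmin h tau p0 phi p (S k))
  + normH1 N h (Rpk D eta amin bmin h tau p0 phi p (S k)) <= 3 * L * Ktrunc * (tau ^ 2 + h ^ 2).
Proof.
  intros HN Htau Hk h. destruct (mesh_size N HN) as (Hh & HhL & HNh). fold h in Hh, HhL, HNh.
  assert (Hk' : INR k * tau + tau <= T).
  { apply Rmult_le_compat_r with (r := tau) in Hk; [|lra].
    unfold Rdiv in Hk. rewrite Rmult_minus_distr_r, Rmult_assoc, Rinv_l in Hk by lra. lra. }
  assert (Hk0 : 0 <= INR k * tau) by (apply Rmult_le_pos; [apply pos_INR | lra]).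
  assert (Ht : tk tau (S k) = INR k * tau + tau) by (unfold tk; rewrite S_INR; ring).
  assert (HK : 0 <= Ktrunc * (tau ^ 2 + h ^ 2)) by
    (apply Rmult_le_pos; [apply Ktrunc_nonneg | pose proof (pow2_ge_0 tau); pose proof (pow2_ge_0 h); lra]).
  pose proof (normL2_le_residual N h (Rphik D amin bmin h tau p0 phi p (S k))
    (Rphik_residuals h tau (tk tau (S k))) amin bmin _ Hh HK
    ltac:(intros i j Hi Hj; apply Rphik_eq_residuals; lra)
    ltac:(intros X Y HX HY; apply Rphik_residuals_abs_le; lra)).
  pose proof (normH1_le_residual N h (Rpk D eta amin bmin h tau p0 phi p (S k))
    (Rpk_residuals h tau (tk tau (S k))) amin bmin _ Hh HK
    ltac:(intros i j Hi Hj; apply Rpk_eq_residuals; lra)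
    ltac:(intros X Y HX HY; repeat split;
          [apply Rpk_residuals_abs_le | apply Rpk_residuals_dx | apply Rpk_residuals_dy]; lra)).
  rewrite HNh in *. lra.
Qed.

Lemma truncation_errors_start_bound N tau : (1 <= N)%nat -> 0 < tau -> tau <= T ->
  let h := L / INR N in
  normL2 N h (Rphi0 D amin bmin h tau p0 phi p)
  + normH1 N h (Rp0 D eta amin bmin h tau p0 phi p) <= 3 * L * Ktrunc * (tau + h ^ 2).
Proof.
  intros HN Htau HtT h. destruct (mesh_size N HN) as (Hh & HhL & HNh). fold h in Hh, HhL, HNh.
  assert (HK : 0 <= Ktrunc * (tau + h ^ 2)) by
    (apply Rmult_le_pos; [apply Ktrunc_nonneg | pose proof (pow2_ge_0 h); lra]).
  pose proof (normL2_le_residual N h (Rphi0 D amin bmin h tau p0 phi p)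
    (Rphi0_residuals h tau) amin bmin _ Hh HK
    ltac:(intros i j Hi Hj; apply Rphi0_eq_residuals; lra)
    ltac:(intros X Y HX HY; apply Rphi0_residuals_abs_le; lra)).
  pose proof (normH1_le_residual N h (Rp0 D eta amin bmin h tau p0 phi p)
    (Rp0_residuals h tau) amin bmin _ Hh HK
    ltac:(intros i j Hi Hj; apply Rp0_eq_residuals; lra)
    ltac:(intros X Y HX HY; repeat split;
          [apply Rp0_residuals_abs_le | apply Rp0_residuals_dx | apply Rp0_residuals_dy]; lra)).
  rewrite HNh in *. lra.
Qed.

Lemma truncation_errors_bound : exists C, forall (N : nat) (tau : R), (1 <= N)%nat -> 0 < tau ->
  let h := L / INR N in
  (forall k : nat, INR k <= T / tau - 1 ->
     normL2 N h (Rphik D amin bmin h tau p0 phi p (S k))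
     + normH1 N h (Rpk D eta amin bmin h tau p0 phi p (S k)) <= C * (tau ^ 2 + h ^ 2)) /\
  (tau <= T ->
     normL2 N h (Rphi0 D amin bmin h tau p0 phi p)
     + normH1 N h (Rp0 D eta amin bmin h tau p0 phi p) <= C * (tau + h ^ 2)).
Proof.
  exists (3 * L * Ktrunc). intros N tau HN Htau. split.
  - intros k Hk. now apply truncation_errors_step_bound.
  - intros HtT. now apply truncation_errors_start_bound.
Qed.

End Model.

Theorem lemma3p2 :
  forall (L amin bmin D eta T mp Mp : R) (p0 : R -> R -> R) (phi p : fun3),
    0 < L -> 0 < D -> 0 < eta -> 0 < T -> 0 < mp ->
    smooth_per2 L p0 ->
    (forall x y, mp <= p0 x y <= Mp) ->
    regular 3 4 phi -> periodic3 L phi ->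
    regular 3 5 p -> periodic3 L p ->
    (forall t x y, 0 <= t <= T -> 0 <= phi t x y /\ 0 <= p t x y) ->
    solves_system D eta T amin bmin L p0 phi p ->
    exists C : R, forall (N : nat) (tau : R),
      (1 <= N)%nat -> 0 < tau ->
      let h := L / INR N in
      (forall k : nat, INR k <= T / tau - 1 ->
         normL2 N h (Rphik D amin bmin h tau p0 phi p (S k))
         + normH1 N h (Rpk D eta amin bmin h tau p0 phi p (S k))
         <= C * (tau ^ 2 + h ^ 2)) /\
      (tau <= T ->
         normL2 N h (Rphi0 D amin bmin h tau p0 phi p)
         + normH1 N h (Rp0 D eta amin bmin h tau p0 phi p)
         <= C * (tau + h ^ 2)).
Proof.
  intros L amin bmin D eta T mp Mp p0 phi p HL HD Heta HT Hmp [Hp0 Hp0_per] Hp0_bounds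
    Hphi Hphi_per Hp Hp_per Hnonneg Hsol.
  destruct (regular_mixed_bounded _ _ _ 0 (2 * T) (amin - L) (amin + 3 * L) (bmin - L) (bmin + 3 * L)
              Hphi) as [Bphi HMphi].
  destruct (regular_mixed_bounded _ _ _ 0 (2 * T) (amin - L) (amin + 3 * L) (bmin - L) (bmin + 3 * L)
              Hp) as [Bp HMp].
  destruct (regular_mixed_bounded _ _ _ 0 (2 * T) (amin - L) (amin + 3 * L) (bmin - L) (bmin + 3 * L)
              (Hp0 5%nat)) as [B0 HM0].
  apply (truncation_errors_bound L amin bmin D eta T mp p0 phi p HL HD Heta HT Hmp (Hp0 5%nat)
           Hp0_per (fun x y => proj1 (Hp0_bounds x y)) Hphi Hphi_per Hp Hp_per Hnonneg Hsol
           Bphi Bp B0 HMphi HMp).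
  intros j l t x y Hjl. apply (HM0 0%nat j l); lia.
Qed.
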